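(* Let $(\mathcal L,f)$ be a Lagrangian pair with $\mathcal L$ Kählerian. If there is a point $q\in\mathcal L$ which is real ($\tau q=q$) and such that $f(q)\notin\mathbb{R}$, then there is an open neighborhood $U\subset\mathcal L$ of $q$ such that the Lagrangian cone $\mathrm{con}(U,f|_U)$ is Kählerian, i.e. the Hermitian form $\hat\gamma=\sqrt{-1}\,\hat\Omega(\cdot,\hat\tau\cdot)$ of $\mathbb{C}^{2n+2}$ restricts to a non-degenerate form on it.
   Context: $\mathbb{C}^{2n}$: coordinates $(z,w)$, $\Omega=\sum dz^i\wedge dw_i$, real structure $\tau$ (complex conjugation), $\gamma=\sqrt{-1}\Omega(\cdot,\tau\cdot)$, $\eta_q=\Omega(q,\cdot)$. A Lagrangian pair $(\mathcal L,f)$: complex Lagrangian submanifold $\mathcal L\subset\mathbb{C}^{2n}$, holomorphic $f$ with $df=-\eta|_{\mathcal L}$; $\mathcal L$ is Kählerian if $\gamma|_{\mathcal L}$ is non-degenerate. $\mathbb{C}^{2n+2}=\mathbb{C}^2\times\mathbb{C}^{2n}$ with coordinates $(z^0,w_0,z,w)$, $\hat\Omega=dz^0\wedge dw_0+\Omega$, real structure $\hat\tau$ (complex conjugation). $\mathrm{con}(\mathcal L,f):=\mathbb{C}^*\cdot\{(1,f(q),q)\mid q\in\mathcal L\}$. *)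

From Stdlib Require Import Reals.
Open Scope R_scope.

Record Cx := mkC { Re : R; Im : R }.
Definition C0 : Cx := mkC 0 0.
Definition C1 : Cx := mkC 1 0.
Definition Ci : Cx := mkC 0 1.
Definition RtoC (r : R) : Cx := mkC r 0.
Definition Cadd (a b : Cx) : Cx := mkC (Re a + Re b) (Im a + Im b).
Definition Copp (a : Cx) : Cx := mkC (- Re a) (- Im a).
Definition Csub (a b : Cx) : Cx := Cadd a (Copp b).
Definition Cmul (a b : Cx) : Cx :=
  mkC (Re a * Re b - Im a * Im b) (Re a * Im b + Im a * Re b).
Definition Cconj (a : Cx) : Cx := mkC (Re a) (- Im a).

(** * Vectors: Cx^N is represented by functions nat -> Cx supported on [0,N) *)
Definition CV := nat -> Cx.
Definition supp (N : nat) (v : CV) : Prop := forall i, (N <= i)%nat -> v i = C0.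
Definition vzero : CV := fun _ => C0.
Definition vadd (u v : CV) : CV := fun i => Cadd (u i) (v i).
Definition vsub (u v : CV) : CV := fun i => Csub (u i) (v i).
Definition vscale (a : Cx) (v : CV) : CV := fun i => Cmul a (v i).
Definition ebasis (j : nat) : CV := fun i => if Nat.eqb i j then C1 else C0.

Fixpoint sumC (n : nat) (F : nat -> Cx) : Cx :=
  match n with O => C0 | S m => Cadd (sumC m F) (F m) end.
Fixpoint sumR (n : nat) (F : nat -> R) : R :=
  match n with O => 0 | S m => sumR m F + F m end.

(** l^1-type norm on Cx^N (all norms are equivalent) *)
Definition normN (N : nat) (v : CV) : R :=
  sumR N (fun i => Rabs (Re (v i)) + Rabs (Im (v i))).

Definition is_open (N : nat) (W : CV -> Prop) : Prop :=
  forall x, W x -> supp N x /\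
    exists r, r > 0 /\ forall y, supp N y -> normN N (vsub y x) < r -> W y.

Definition cont_within (n N : nat) (h : CV -> CV) (D : CV -> Prop) (x : CV) : Prop :=
  forall eps, eps > 0 -> exists del, del > 0 /\
    forall y, D y -> normN n (vsub y x) < del -> normN N (vsub (h y) (h x)) < eps.

Definition dderiv (g : CV -> Cx) (x v : CV) (d : Cx) : Prop :=
  derivable_pt_lim (fun t => Re (g (vadd x (vscale (RtoC t) v)))) 0 (Re d) /\
  derivable_pt_lim (fun t => Im (g (vadd x (vscale (RtoC t) v)))) 0 (Im d).

(** g : Cx^n ⊇ D -> Cx^N is holomorphic (Cx^1 with Cauchy–Riemann equations),
    with complex partial derivatives dg j = ∂g/∂z_j *)
Definition holo_map (n N : nat) (g : CV -> CV) (D : CV -> Prop)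
  (dg : nat -> CV -> CV) : Prop :=
  forall x, D x -> forall j, (j < n)%nat ->
    (forall i, dderiv (fun y => g y i) x (ebasis j) (dg j x i)) /\
    (forall i, dderiv (fun y => g y i) x (vscale Ci (ebasis j)) (Cmul Ci (dg j x i))) /\
    cont_within n N (dg j) D x.

Definition holo_fun (n : nat) (h : CV -> Cx) (D : CV -> Prop) : Prop :=
  exists dh, holo_map n 1 (fun x _ => h x) D dh.

(** holomorphic chart phi : D -> S ∩ W of a subset S ⊆ Cx^N, D open in Cx^n:
    holomorphic immersion which is a homeomorphism onto S ∩ W *)
Definition cchart (n N : nat) (S : CV -> Prop) (phi : CV -> CV)
  (D W : CV -> Prop) : Prop :=
  is_open n D /\ is_open N W /\
  (exists dphi, holo_map n N phi D dphi /\
     forall x, D x -> forall a : nat -> Cx,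
       (forall i, (i < N)%nat -> sumC n (fun j => Cmul (a j) (dphi j x i)) = C0) ->
       forall j, (j < n)%nat -> a j = C0) /\
  (forall x, D x -> S (phi x) /\ W (phi x)) /\
  (forall y, S y -> W y -> exists x, D x /\ phi x = y) /\
  (forall x x', D x -> D x' -> phi x = phi x' -> x = x') /\
  (forall x, D x -> forall eps, eps > 0 -> exists del, del > 0 /\
     forall x', D x' -> normN N (vsub (phi x') (phi x)) < del ->
       normN n (vsub x' x) < eps).

Definition csubmfd (n N : nat) (S : CV -> Prop) : Prop :=
  (forall y, S y -> supp N y) /\
  forall p, S p -> exists phi D W, cchart n N S phi D W /\ W p.

Definition holo_on (n N : nat) (S : CV -> Prop) (f : CV -> Cx) : Prop :=
  forall phi D W, cchart n N S phi D W -> holo_fun n (fun x => f (phi x)) D.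

Definition curve_in (S : CV -> Prop) (p v : CV) (c : R -> CV) (eps : R) : Prop :=
  eps > 0 /\ c 0 = p /\ (forall t, Rabs t < eps -> S (c t)) /\
  forall i, derivable_pt_lim (fun t => Re (c t i)) 0 (Re (v i)) /\
            derivable_pt_lim (fun t => Im (c t i)) 0 (Im (v i)).

Definition tangent (S : CV -> Prop) (p v : CV) : Prop :=
  exists c eps, curve_in S p v c eps.

(** * Symplectic data on Cx^{2n}: z^i = v i, w_i = v (n+i) (i < n) *)
Definition Omega (n : nat) (u v : CV) : Cx :=
  sumC n (fun i => Csub (Cmul (u i) (v (n + i)%nat)) (Cmul (u (n + i)%nat) (v i))).
Definition tau (v : CV) : CV := fun i => Cconj (v i).
Definition gamma (n : nat) (u v : CV) : Cx := Cmul Ci (Omega n u (tau v)).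

(** * Cx^{2n+2} = Cx^2 x Cx^{2n}: coordinates (z^0, w_0, z, w) stored as
      P 0 = z^0, P 1 = w_0, P (2+k) = k-th coordinate of the Cx^{2n} part *)
Definition lift (a b : Cx) (q : CV) : CV :=
  fun k => match k with O => a | S O => b | S (S k') => q k' end.
Definition shift2 (u : CV) : CV := fun k => u (S (S k)).
Definition hOmega (n : nat) (u v : CV) : Cx :=
  Cadd (Csub (Cmul (u 0%nat) (v 1%nat)) (Cmul (u 1%nat) (v 0%nat)))
       (Omega n (shift2 u) (shift2 v)).
Definition hgamma (n : nat) (u v : CV) : Cx := Cmul Ci (hOmega n u (tau v)).

Definition nondeg_on (B : CV -> CV -> Cx) (S : CV -> Prop) : Prop :=
  forall p, S p -> forall v, tangent S p v ->
    (forall w, tangent S p w -> B v w = C0) -> v = vzero.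

Definition lagrangian (n : nat) (L : CV -> Prop) : Prop :=
  csubmfd n (2 * n) L /\
  forall p, L p -> forall v w, tangent L p v -> tangent L p w -> Omega n v w = C0.

(** Lagrangian pair (L, f): f holomorphic on L with df = - eta|_L,
    eta_p = Omega(p, .) *)
Definition lag_pair (n : nat) (L : CV -> Prop) (f : CV -> Cx) : Prop :=
  lagrangian n L /\ holo_on n (2 * n) L f /\
  forall p v c eps, curve_in L p v c eps ->
    derivable_pt_lim (fun t => Re (f (c t))) 0 (Re (Copp (Omega n p v))) /\
    derivable_pt_lim (fun t => Im (f (c t))) 0 (Im (Copp (Omega n p v))).

Definition kaehlerian (n : nat) (L : CV -> Prop) : Prop := nondeg_on (gamma n) L.

Definition cone (U : CV -> Prop) (f : CV -> Cx) : CV -> Prop :=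
  fun P => exists lam q, lam <> C0 /\ U q /\ P = vscale lam (lift C1 (f q) q).

Definition rel_open (N : nat) (L U : CV -> Prop) : Prop :=
  forall p, U p -> L p /\
    exists r, r > 0 /\ forall p', L p' -> normN N (vsub p' p) < r -> U p'.

(** The tangent space of the cone at [lam E(y)], where [E(y) = (1, f(phi y), phi y)] for a chart
    [phi] of [L], is spanned by [E(y)] and the lifts [V_k(y) = (0, df(d_k phi), d_k phi)] of the
    coordinate vectors; this is where [df = -eta] enters.  Hence the cone is Kaehlerian at
    [lam E(y)] as soon as the Gram matrix of [hgamma] on this frame is invertible.  At a real point
    [q = phi x0] the identities [Omega(q, q) = 0] and [tau q = q] make that matrix block diagonal:
    its corner entry is [conj f(q) - f(q) = -2 i Im f(q) <> 0], and the other block is the Gram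
    matrix of [gamma] on [T_q L], invertible because [L] is Kaehlerian.  The frame depends
    continuously on [y] and invertibility survives small perturbations, which yields [U]. *)

From Pilot Require Import Defs.
From Stdlib Require Import Reals Lra Lia FunctionalExtensionality Classical.
Open Scope R_scope.

Lemma Cx_ext a b : Re a = Re b -> Im a = Im b -> a = b.
Proof. destruct a, b; simpl; intros; subst; reflexivity. Qed.

Ltac Cring := apply Cx_ext; simpl; ring.

Definition cnorm (z : Cx) : R := Rabs (Re z) + Rabs (Im z).

Lemma cnorm_ge0 z : 0 <= cnorm z.
Proof. unfold cnorm; pose proof (Rabs_pos (Re z)); pose proof (Rabs_pos (Im z)); lra. Qed.

Lemma Rabs_le0_eq0 x : Rabs x <= 0 -> x = 0.
Proof. intros H. destruct (Req_dec x 0); auto. pose proof (Rabs_pos_lt x H0); lra. Qed.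

Lemma cnorm_eq0 z : cnorm z = 0 -> z = C0.
Proof.
  unfold cnorm; intros H. pose proof (Rabs_pos (Re z)); pose proof (Rabs_pos (Im z)).
  apply Cx_ext; simpl; apply Rabs_le0_eq0; lra.
Qed.

Lemma cnorm_pos a : a <> C0 -> cnorm a > 0.
Proof.
  intros H. destruct (cnorm_ge0 a) as [|E]; auto.
  exfalso; apply H, cnorm_eq0; now symmetry.
Qed.

Lemma cnorm_C0 : cnorm C0 = 0.
Proof. unfold cnorm; simpl; rewrite Rabs_R0; ring. Qed.

Lemma cnorm_add a b : cnorm (Cadd a b) <= cnorm a + cnorm b.
Proof.
  unfold cnorm; simpl.
  pose proof (Rabs_triang (Re a) (Re b)). pose proof (Rabs_triang (Im a) (Im b)). lra.
Qed.

Lemma cnorm_opp a : cnorm (Copp a) = cnorm a.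
Proof. unfold cnorm; simpl; rewrite !Rabs_Ropp; ring. Qed.

Lemma cnorm_sub a b : cnorm (Csub a b) <= cnorm a + cnorm b.
Proof. unfold Csub. rewrite <- (cnorm_opp b). apply cnorm_add. Qed.

Lemma cnorm_mul a b : cnorm (Cmul a b) <= cnorm a * cnorm b.
Proof.
  unfold cnorm; simpl.
  pose proof (Rabs_triang (Re a * Re b) (- (Im a * Im b))).
  pose proof (Rabs_triang (Re a * Im b) (Im a * Re b)).
  rewrite Rabs_Ropp in H. rewrite !Rabs_mult in H, H0. unfold Rminus. nra.
Qed.

Lemma cnorm_Re a : Rabs (Re a) <= cnorm a.
Proof. unfold cnorm; pose proof (Rabs_pos (Im a)); lra. Qed.

Lemma cnorm_Im a : Rabs (Im a) <= cnorm a.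
Proof. unfold cnorm; pose proof (Rabs_pos (Re a)); lra. Qed.

Lemma cnorm_RtoC r : cnorm (RtoC r) = Rabs r.
Proof. unfold cnorm; simpl; rewrite Rabs_R0; ring. Qed.

Lemma cnorm_RtoC_mul t z : cnorm (Cmul (RtoC t) z) = Rabs t * cnorm z.
Proof.
  unfold cnorm; simpl. replace (t * Re z - 0 * Im z) with (t * Re z) by ring.
  replace (t * Im z + 0 * Re z) with (t * Im z) by ring. rewrite !Rabs_mult. ring.
Qed.

Lemma cnorm_conj a : cnorm (Cconj a) = cnorm a.
Proof. unfold cnorm; simpl; rewrite Rabs_Ropp; ring. Qed.

Lemma Cadd_0_l a : Cadd C0 a = a. Proof. destruct a; Cring. Qed.
Lemma Cadd_0_r a : Cadd a C0 = a. Proof. destruct a; Cring. Qed.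
Lemma Cmul_comm a b : Cmul a b = Cmul b a. Proof. Cring. Qed.
Lemma Cmul_assoc a b c : Cmul (Cmul a b) c = Cmul a (Cmul b c). Proof. Cring. Qed.
Lemma Cmul_0_l a : Cmul C0 a = C0. Proof. Cring. Qed.
Lemma Cmul_0_r a : Cmul a C0 = C0. Proof. Cring. Qed.
Lemma Cmul_1_l a : Cmul Defs.C1 a = a. Proof. destruct a; Cring. Qed.

Definition Cinv (a : Cx) : Cx :=
  mkC (Re a / (Re a * Re a + Im a * Im a)) (- Im a / (Re a * Re a + Im a * Im a)).

Lemma Cnorm2_neq0 a : a <> C0 -> Re a * Re a + Im a * Im a <> 0.
Proof. intros H E. apply H. apply Cx_ext; simpl; nra. Qed.

Lemma Cinv_l a : a <> C0 -> Cmul (Cinv a) a = Defs.C1.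
Proof. intros H. pose proof (Cnorm2_neq0 a H). apply Cx_ext; simpl; field; auto. Qed.

Lemma Cmul_eq0_cancel a b : Cmul a b = C0 -> a <> C0 -> b = C0.
Proof.
  intros E H. rewrite <- (Cmul_1_l b), <- (Cinv_l a H), Cmul_assoc, E. apply Cmul_0_r.
Qed.

Lemma Ci_neq0 : Ci <> C0.
Proof. intros E. assert (H := f_equal Im E). simpl in H. lra. Qed.

Lemma Cconj_neq0 a : a <> C0 -> Cconj a <> C0.
Proof.
  intros H E; apply H.
  apply Cx_ext; assert (H1 := f_equal Re E); assert (H2 := f_equal Im E); simpl in *; lra.
Qed.

Lemma sumC_ext m F G : (forall j, (j < m)%nat -> F j = G j) -> sumC m F = sumC m G.
Proof.
  induction m; simpl; intros; auto.
  rewrite IHm by (intros; apply H; lia). rewrite H by lia; auto.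
Qed.

Lemma sumR_ext m F G : (forall j, (j < m)%nat -> F j = G j) -> sumR m F = sumR m G.
Proof.
  induction m; simpl; intros; auto.
  rewrite IHm by (intros; apply H; lia). rewrite H by lia; auto.
Qed.

Lemma sumC_add m F G : sumC m (fun j => Cadd (F j) (G j)) = Cadd (sumC m F) (sumC m G).
Proof. induction m; simpl. Cring. rewrite IHm. Cring. Qed.

Lemma sumC_opp m F : sumC m (fun j => Copp (F j)) = Copp (sumC m F).
Proof. induction m; simpl. Cring. rewrite IHm. Cring. Qed.

Lemma sumC_sub m F G : sumC m (fun j => Csub (F j) (G j)) = Csub (sumC m F) (sumC m G).
Proof. unfold Csub. rewrite sumC_add, sumC_opp. auto. Qed.

Lemma sumC_scal m a F : sumC m (fun j => Cmul a (F j)) = Cmul a (sumC m F).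
Proof. induction m; simpl. Cring. rewrite IHm. Cring. Qed.

Lemma sumC_scal_r m a F : sumC m (fun j => Cmul (F j) a) = Cmul (sumC m F) a.
Proof. induction m; simpl. Cring. rewrite IHm. Cring. Qed.

Lemma sumC_zero m F : (forall j, (j < m)%nat -> F j = C0) -> sumC m F = C0.
Proof.
  induction m; simpl; intros; auto.
  rewrite IHm by (intros; apply H; lia). rewrite H by lia. Cring.
Qed.

Lemma sumC_swap m k F :
  sumC m (fun j => sumC k (fun i => F j i)) = sumC k (fun i => sumC m (fun j => F j i)).
Proof.
  induction m; simpl. symmetry; apply sumC_zero; auto.
  rewrite IHm, <- sumC_add. auto.
Qed.

Lemma sumC_shift m F : sumC (S m) F = Cadd (F 0%nat) (sumC m (fun j => F (S j))).
Proof. induction m; simpl. Cring. simpl in IHm. rewrite IHm. Cring. Qed.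

Lemma Cconj_sumC m F : Cconj (sumC m F) = sumC m (fun j => Cconj (F j)).
Proof. induction m; simpl. Cring. rewrite <- IHm. Cring. Qed.

Lemma sumR_le m F G : (forall j, (j < m)%nat -> F j <= G j) -> sumR m F <= sumR m G.
Proof.
  induction m; simpl; intros. lra.
  pose proof (H m ltac:(lia)). pose proof (IHm ltac:(intros; apply H; lia)). lra.
Qed.

Lemma sumR_const m c : sumR m (fun _ => c) = INR m * c.
Proof. induction m; simpl sumR. simpl; ring. rewrite IHm, S_INR; ring. Qed.

Lemma sumR_nonneg m F : (forall j, (j < m)%nat -> 0 <= F j) -> 0 <= sumR m F.
Proof.
  intros. apply Rle_trans with (sumR m (fun _ => 0)).
  rewrite sumR_const; lra. apply sumR_le; auto.
Qed.

Lemma sumR_add m F G : sumR m (fun j => F j + G j) = sumR m F + sumR m G.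
Proof. induction m; simpl. ring. rewrite IHm; ring. Qed.

Lemma sumR_scal m a F : sumR m (fun j => a * F j) = a * sumR m F.
Proof. induction m; simpl. ring. rewrite IHm; ring. Qed.

Lemma sumR_term m F j :
  (forall j, (j < m)%nat -> 0 <= F j) -> (j < m)%nat -> F j <= sumR m F.
Proof.
  induction m; simpl; intros. lia.
  destruct (Nat.eq_dec j m).
  - subst. pose proof (sumR_nonneg m F ltac:(intros; apply H; lia)). lra.
  - pose proof (IHm ltac:(intros; apply H; lia) ltac:(lia)). pose proof (H m ltac:(lia)). lra.
Qed.

Lemma sumR_swap m k F :
  sumR m (fun j => sumR k (fun i => F j i)) = sumR k (fun i => sumR m (fun j => F j i)).
Proof.
  induction m; simpl.
  - symmetry. clear. induction k; simpl; auto. rewrite IHk; ring.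
  - rewrite IHm, <- sumR_add. auto.
Qed.

Lemma sumR_kron n j a : (j < n)%nat -> sumR n (fun i => if Nat.eqb i j then a else 0) = a.
Proof.
  induction n; intros; simpl. lia.
  destruct (Nat.eqb_spec n j).
  - subst. rewrite (sumR_ext j _ (fun _ => 0)), sumR_const. ring.
    intros. destruct (Nat.eqb_spec j0 j); auto; lia.
  - rewrite IHn by lia. ring.
Qed.

Lemma cnorm_sum m F : cnorm (sumC m F) <= sumR m (fun j => cnorm (F j)).
Proof.
  induction m; simpl. rewrite cnorm_C0; lra.
  pose proof (cnorm_add (sumC m F) (F m)). lra.
Qed.

Lemma sumR_cnorm_nonneg m F : 0 <= sumR m (fun j => cnorm (F j)).
Proof. apply sumR_nonneg; intros; apply cnorm_ge0. Qed.

Lemma normN_eq N v : normN N v = sumR N (fun i => cnorm (v i)).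
Proof. reflexivity. Qed.

Lemma normN_ge0 N v : 0 <= normN N v.
Proof. apply sumR_cnorm_nonneg. Qed.

Lemma normN_comp N v i : (i < N)%nat -> cnorm (v i) <= normN N v.
Proof.
  intros. rewrite normN_eq. apply (sumR_term N (fun i => cnorm (v i))); auto.
  intros; apply cnorm_ge0.
Qed.

Lemma normN_zero N v : normN N v = 0 -> forall i, (i < N)%nat -> v i = C0.
Proof.
  intros. apply cnorm_eq0. pose proof (normN_comp N v i H0). pose proof (cnorm_ge0 (v i)). lra.
Qed.

Lemma normN_le_pointwise n u w :
  (forall j, (j < n)%nat -> cnorm (u j) <= cnorm (w j)) -> normN n u <= normN n w.
Proof. intros; rewrite !normN_eq; apply sumR_le; auto. Qed.

Lemma normN_triang N u v : normN N (vadd u v) <= normN N u + normN N v.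
Proof. rewrite !normN_eq, <- sumR_add. apply sumR_le. intros; apply cnorm_add. Qed.

Lemma normN_sub N u v : normN N (vsub u v) <= normN N u + normN N v.
Proof. rewrite !normN_eq, <- sumR_add. apply sumR_le. intros; apply cnorm_sub. Qed.

Lemma normN_sub_triang N u v w :
  normN N (vsub u w) <= normN N (vsub u v) + normN N (vsub v w).
Proof.
  rewrite !normN_eq, <- sumR_add. apply sumR_le. intros. unfold vsub.
  replace (Csub (u j) (w j)) with (Cadd (Csub (u j) (v j)) (Csub (v j) (w j))) by Cring.
  apply cnorm_add.
Qed.

Lemma normN_sub_sym N u v : normN N (vsub u v) = normN N (vsub v u).
Proof.
  rewrite !normN_eq. apply sumR_ext; intros. unfold vsub.
  replace (Csub (v j) (u j)) with (Copp (Csub (u j) (v j))) by Cring. rewrite cnorm_opp; auto.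
Qed.

Lemma normN_scal N a v : normN N (vscale a v) <= cnorm a * normN N v.
Proof. rewrite !normN_eq, <- sumR_scal. apply sumR_le; intros; apply cnorm_mul. Qed.

Lemma normN_RtoC N t w : normN N (vscale (RtoC t) w) = Rabs t * normN N w.
Proof.
  rewrite !normN_eq, <- sumR_scal. apply sumR_ext; intros; unfold vscale; apply cnorm_RtoC_mul.
Qed.

Lemma normN_ebasis n j t : (j < n)%nat -> normN n (vscale (RtoC t) (ebasis j)) = Rabs t.
Proof.
  intros Hj. rewrite normN_eq, <- (sumR_kron n j (Rabs t)) by auto. apply sumR_ext.
  intros i Hi. unfold vscale, ebasis. rewrite cnorm_RtoC_mul.
  destruct (Nat.eqb_spec i j); rewrite ?cnorm_C0; unfold cnorm; simpl;
    rewrite ?Rabs_R0, ?Rabs_R1; ring.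
Qed.

Definition vsum (m : nat) (c : nat -> Cx) (U : nat -> CV) : CV :=
  fun i => sumC m (fun j => Cmul (c j) (U j i)).

Lemma normN_vsum N n a col :
  normN N (vsum n a col) <= sumR n (fun j => normN N (col j)) * normN n a.
Proof.
  rewrite normN_eq. unfold vsum.
  apply Rle_trans with (sumR N (fun i => sumR n (fun j => cnorm (a j) * cnorm (col j i)))).
  { apply sumR_le; intros. eapply Rle_trans. apply cnorm_sum.
    apply sumR_le; intros; apply cnorm_mul. }
  rewrite sumR_swap, (normN_eq n a), Rmult_comm, <- sumR_scal.
  apply sumR_le. intros j Hj. rewrite sumR_scal. fold (normN N (col j)).
  apply Rmult_le_compat_r. apply normN_ge0.
  apply (sumR_term n (fun j => cnorm (a j))); auto. intros; apply cnorm_ge0.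
Qed.

Lemma vsum_sub n a b col : vsum n (vsub a b) col = vsub (vsum n a col) (vsum n b col).
Proof.
  apply functional_extensionality; intros i; unfold vsum, vsub.
  rewrite <- sumC_sub. apply sumC_ext; intros; Cring.
Qed.

Lemma vsum_scal n a b col : vsum n (vscale a b) col = vscale a (vsum n b col).
Proof.
  apply functional_extensionality; intros i; unfold vsum, vscale.
  rewrite <- sumC_scal. apply sumC_ext; intros; Cring.
Qed.

Lemma vadd_scal0 x b : vadd x (vscale (RtoC 0) b) = x.
Proof. apply functional_extensionality; intros; unfold vadd, vscale. destruct (x x0); Cring. Qed.

Lemma Omega_conj n u v : Cconj (Omega n u v) = Omega n (tau u) (tau v).
Proof. unfold Omega, tau. rewrite Cconj_sumC. apply sumC_ext; intros. Cring. Qed.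

Lemma Omega_self n u : Omega n u u = C0.
Proof. unfold Omega. apply sumC_zero; intros. Cring. Qed.

Lemma Omega_antisym n u v : Omega n u v = Copp (Omega n v u).
Proof. unfold Omega. rewrite <- sumC_opp. apply sumC_ext; intros; Cring. Qed.

Lemma Omega_sum_l n m c U w :
  Omega n (vsum m c U) w = sumC m (fun j => Cmul (c j) (Omega n (U j) w)).
Proof.
  unfold Omega, vsum.
  transitivity (sumC n (fun i => sumC m (fun j => Cmul (c j)
      (Csub (Cmul (U j i) (w (n + i)%nat)) (Cmul (U j (n + i)%nat) (w i)))))).
  - apply sumC_ext; intros. rewrite <- !sumC_scal_r, <- sumC_sub. apply sumC_ext; intros; Cring.
  - rewrite sumC_swap. apply sumC_ext; intros. rewrite sumC_scal. auto.
Qed.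

Lemma Omega_sum_r n m c U w :
  Omega n w (vsum m c U) = sumC m (fun j => Cmul (c j) (Omega n w (U j))).
Proof.
  rewrite Omega_antisym, Omega_sum_l, <- sumC_opp. apply sumC_ext; intros.
  rewrite (Omega_antisym n w). Cring.
Qed.

Lemma hOmega_sum_l n m c U w :
  hOmega n (vsum m c U) w = sumC m (fun j => Cmul (c j) (hOmega n (U j) w)).
Proof.
  unfold hOmega. change (shift2 (vsum m c U)) with (vsum m c (fun j => shift2 (U j))).
  rewrite Omega_sum_l. unfold vsum. rewrite <- !sumC_scal_r, <- sumC_sub, <- sumC_add.
  apply sumC_ext; intros; Cring.
Qed.

Lemma hOmega_scal_r n a u w : hOmega n w (vscale a u) = Cmul a (hOmega n w u).
Proof.
  unfold hOmega. change (shift2 (vscale a u)) with (vscale a (shift2 u)).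
  assert (Omega n (shift2 w) (vscale a (shift2 u)) = Cmul a (Omega n (shift2 w) (shift2 u))).
  { unfold Omega, vscale. rewrite <- sumC_scal. apply sumC_ext; intros; Cring. }
  rewrite H. unfold vscale; Cring.
Qed.

Lemma tau_scal a u : tau (vscale a u) = vscale (Cconj a) (tau u).
Proof. apply functional_extensionality; intros; unfold tau, vscale; Cring. Qed.

Lemma tau_lift a b u : tau (lift a b u) = lift (Cconj a) (Cconj b) (tau u).
Proof. apply functional_extensionality; intros [|[|i]]; reflexivity. Qed.

Lemma shift2_lift a b u : shift2 (lift a b u) = u.
Proof. reflexivity. Qed.

(** * Bounded left inverses of injective linear maps *)

Definition Clinear (k : CV -> Cx) : Prop :=
  (forall u w, k (vadd u w) = Cadd (k u) (k w)) /\
  (forall a u, k (vscale a u) = Cmul a (k u)).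

Definition kron (j k : nat) : Cx := if Nat.eqb j k then Defs.C1 else C0.

Lemma Clinear_zero k : Clinear k -> k vzero = C0.
Proof.
  intros [_ H]. replace vzero with (vscale C0 vzero) by
    (apply functional_extensionality; intros; unfold vscale, vzero; Cring).
  rewrite H. Cring.
Qed.

Lemma Clinear_vsum k m c U :
  Clinear k -> k (vsum m c U) = sumC m (fun l => Cmul (c l) (k (U l))).
Proof.
  intros HL. induction m.
  - apply (Clinear_zero k HL).
  - change (vsum (S m) c U) with (vadd (vsum m c U) (vscale (c m) (U m))).
    destruct HL as [Ha Hs]. rewrite Ha, Hs, IHm. reflexivity.
Qed.

Lemma Clinear_sub k u w : Clinear k -> k (vsub u w) = Csub (k u) (k w).
Proof.
  intros [A B]. replace (vsub u w) with (vadd u (vscale (Copp Defs.C1) w)).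
  - rewrite A, B. Cring.
  - apply functional_extensionality; intros; unfold vsub, vadd, vscale; Cring.
Qed.

Lemma sumC_kron m c j : (j < m)%nat -> sumC m (fun l => Cmul (c l) (kron j l)) = c j.
Proof.
  induction m; intros. lia. simpl. unfold kron at 2.
  destruct (Nat.eq_dec j m).
  - subst. rewrite Nat.eqb_refl, sumC_zero. destruct (c m); Cring.
    intros j0 Hj0. unfold kron. destruct (Nat.eqb_spec m j0). lia. Cring.
  - destruct (Nat.eqb_spec j m). lia. rewrite IHm by lia. destruct (c j); Cring.
Qed.

Definition lin_indep (N m : nat) (col : nat -> CV) : Prop :=
  forall a : nat -> Cx, (forall i, (i < N)%nat -> vsum m a col i = C0) ->
    forall j, (j < m)%nat -> a j = C0.

Definition left_inverse (N m : nat) (col : nat -> CV) (k : nat -> CV -> Cx) (C : R) : Prop :=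
  (forall j, (j < m)%nat -> Clinear (k j)) /\
  (forall j l, (j < m)%nat -> (l < m)%nat -> k j (col l) = kron j l) /\
  0 <= C /\ (forall j w, (j < m)%nat -> cnorm (k j w) <= C * normN N w).

Lemma lin_indep_pivot N m col :
  lin_indep N (S m) col -> exists i0, (i0 < N)%nat /\ col m i0 <> C0.
Proof.
  intros Hind. apply NNPP. intros Hno.
  assert (H : kron m m = C0).
  { apply (Hind (kron m)); [|lia].
    intros i Hi. unfold vsum. simpl. rewrite sumC_zero.
    - unfold kron; rewrite Nat.eqb_refl. destruct (classic (col m i = C0)) as [E|E].
      + rewrite E; Cring.
      + exfalso; apply Hno; eauto.
    - intros j Hj. unfold kron. destruct (Nat.eqb_spec m j). lia. Cring. }
  unfold kron in H. rewrite Nat.eqb_refl in H. assert (H1 := f_equal Re H). simpl in H1. lra.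
Qed.

(** Gaussian elimination of the last column against a pivot entry [col m i0 <> 0]. *)
Section Pivot.
Variables (N m i0 : nat) (col : nat -> CV).
Hypothesis Hi0 : (i0 < N)%nat.
Hypothesis Hpiv : col m i0 <> C0.

Definition pivot_proj (w : CV) : CV := vsub w (vscale (Cmul (w i0) (Cinv (col m i0))) (col m)).

Lemma pivot_proj_Clinear j : Clinear (fun w => pivot_proj w j).
Proof. split; intros; unfold pivot_proj, vsub, vadd, vscale; Cring. Qed.

Lemma pivot_proj_col : pivot_proj (col m) = vzero.
Proof.
  apply functional_extensionality; intros; unfold pivot_proj, vsub, vscale, vzero.
  rewrite (Cmul_comm (col m i0)), Cinv_l by auto. Cring.
Qed.

Definition pivot_const : R := 1 + cnorm (Cinv (col m i0)) * normN N (col m).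

Lemma pivot_const_ge0 : 0 <= pivot_const.
Proof.
  unfold pivot_const. pose proof (cnorm_ge0 (Cinv (col m i0))). pose proof (normN_ge0 N (col m)).
  nra.
Qed.

Lemma pivot_proj_bound w : normN N (pivot_proj w) <= pivot_const * normN N w.
Proof.
  unfold pivot_proj. eapply Rle_trans. apply normN_sub.
  eapply Rle_trans. apply Rplus_le_compat_l, normN_scal.
  eapply Rle_trans. apply Rplus_le_compat_l, Rmult_le_compat_r. apply normN_ge0. apply cnorm_mul.
  assert (cnorm (w i0) <= normN N w) by (apply normN_comp; auto).
  pose proof (cnorm_ge0 (Cinv (col m i0))). pose proof (normN_ge0 N (col m)).
  pose proof (cnorm_ge0 (w i0)). unfold pivot_const.
  assert (cnorm (w i0) * (cnorm (Cinv (col m i0)) * normN N (col m))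
          <= normN N w * (cnorm (Cinv (col m i0)) * normN N (col m)))
    by (apply Rmult_le_compat_r; nra).
  nra.
Qed.

Lemma pivot_proj_lin_indep :
  lin_indep N (S m) col -> lin_indep N m (fun j => pivot_proj (col j)).
Proof.
  intros Hind a Ha j Hj.
  set (s := sumC m (fun l => Cmul (a l) (col l i0))).
  set (a' := fun l => if Nat.eqb l m then Copp (Cmul s (Cinv (col m i0))) else a l).
  replace (a j) with (a' j) by (unfold a'; destruct (Nat.eqb_spec j m); auto; lia).
  apply Hind; auto. intros i Hi. unfold vsum. simpl.
  rewrite (sumC_ext m _ (fun l => Cmul (a l) (col l i))).
  2:{ intros; unfold a'; destruct (Nat.eqb_spec j0 m); auto; lia. }
  unfold a'; rewrite Nat.eqb_refl.
  specialize (Ha i Hi). unfold vsum, pivot_proj, vsub, vscale in Ha.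
  assert (sumC m (fun l => Cmul (a l) (col l i)) =
    Cadd (sumC m (fun l => Cmul (a l)
            (Csub (col l i) (Cmul (Cmul (col l i0) (Cinv (col m i0))) (col m i)))))
         (Cmul (Cmul s (Cinv (col m i0))) (col m i))).
  { unfold s. rewrite <- !sumC_scal_r, <- sumC_add. apply sumC_ext; intros; Cring. }
  rewrite H, Ha. Cring.
Qed.

Variables (k : nat -> CV -> Cx) (C : R).
Hypothesis Hk : left_inverse N m (fun j => pivot_proj (col j)) k C.

(* Writing [w = sum_(l <= m) a_l col_l], the [a_l] with [l < m] are [k l (pivot_proj w)] and the
   pivot row [w i0 = sum_l a_l col_l i0] determines [a_m]. *)
Definition pivot_last (w : CV) : Cx :=
  Cmul (Cinv (col m i0)) (Csub (w i0) (sumC m (fun l => Cmul (k l (pivot_proj w)) (col l i0)))).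

Definition pivot_extend (j : nat) (w : CV) : Cx :=
  if Nat.ltb j m then k j (pivot_proj w) else pivot_last w.

Lemma pivot_extend_Clinear j : (j < S m)%nat -> Clinear (pivot_extend j).
Proof.
  destruct Hk as [Hlin _].
  assert (Hpa : forall u w, pivot_proj (vadd u w) = vadd (pivot_proj u) (pivot_proj w)).
  { intros; apply functional_extensionality; intros; apply pivot_proj_Clinear. }
  assert (Hps : forall a u, pivot_proj (vscale a u) = vscale a (pivot_proj u)).
  { intros; apply functional_extensionality; intros; apply pivot_proj_Clinear. }
  intros Hj. unfold pivot_extend. destruct (Nat.ltb_spec j m).
  - destruct (Hlin j H) as [A B]. split; intros; [rewrite Hpa, A | rewrite Hps, B]; auto.
  - split; intros; unfold pivot_last.
    + rewrite Hpa, (sumC_ext m _ (fun l => Cadd (Cmul (k l (pivot_proj u)) (col l i0))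
                                               (Cmul (k l (pivot_proj w)) (col l i0)))).
      * rewrite sumC_add. unfold vadd at 1. Cring.
      * intros. destruct (Hlin j0 H0) as [A _]. rewrite A. Cring.
    + rewrite Hps, (sumC_ext m _ (fun l => Cmul a (Cmul (k l (pivot_proj u)) (col l i0)))).
      * rewrite sumC_scal. unfold vscale at 1. Cring.
      * intros. destruct (Hlin j0 H0) as [_ B]. rewrite B. Cring.
Qed.

Lemma pivot_extend_kron j l : (j < S m)%nat -> (l < S m)%nat -> pivot_extend j (col l) = kron j l.
Proof.
  destruct Hk as [Hlin [Hdel _]]. intros Hj Hl. unfold pivot_extend.
  destruct (Nat.ltb_spec j m), (Nat.eq_dec l m) as [->|Hlm].
  - rewrite pivot_proj_col, (Clinear_zero _ (Hlin j H)).
    unfold kron. destruct (Nat.eqb_spec j m); auto; lia.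
  - apply Hdel; auto; lia.
  - replace j with m by lia. unfold pivot_last. rewrite pivot_proj_col, sumC_zero.
    + unfold kron; rewrite Nat.eqb_refl, <- (Cinv_l (col m i0) Hpiv). Cring.
    + intros. rewrite (Clinear_zero _ (Hlin j0 H0)). Cring.
  - replace j with m by lia. unfold pivot_last.
    rewrite (sumC_ext m _ (fun l0 => Cmul (col l i0) (kron l l0))).
    + rewrite sumC_kron by lia. unfold kron. destruct (Nat.eqb_spec m l). lia. Cring.
    + intros. rewrite Hdel by (auto; lia). unfold kron.
      destruct (Nat.eqb_spec j0 l), (Nat.eqb_spec l j0); subst; try lia; Cring.
Qed.

Definition pivot_last_const : R :=
  cnorm (Cinv (col m i0)) * (1 + C * pivot_const * sumR m (fun l => cnorm (col l i0))).

Lemma pivot_last_bound w : cnorm (pivot_last w) <= pivot_last_const * normN N w.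
Proof.
  destruct Hk as [_ [_ [HC Hb]]].
  pose proof pivot_const_ge0. pose proof (normN_ge0 N w).
  set (S0 := sumR m (fun l => cnorm (col l i0))).
  assert (HS0 : 0 <= S0) by apply sumR_cnorm_nonneg.
  assert (Hkl : forall l, (l < m)%nat -> cnorm (k l (pivot_proj w)) <= C * pivot_const * normN N w).
  { intros l Hl. eapply Rle_trans. apply Hb; auto. rewrite Rmult_assoc.
    apply Rmult_le_compat_l; auto. apply pivot_proj_bound. }
  assert (Hsum : cnorm (sumC m (fun l => Cmul (k l (pivot_proj w)) (col l i0)))
                 <= C * pivot_const * S0 * normN N w).
  { eapply Rle_trans. apply cnorm_sum. unfold S0.
    rewrite (Rmult_comm _ (normN N w)), <- !sumR_scal.
    apply sumR_le. intros l Hl. eapply Rle_trans. apply cnorm_mul.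
    pose proof (Hkl l Hl). pose proof (cnorm_ge0 (col l i0)). nra. }
  assert (cnorm (w i0) <= normN N w) by (apply normN_comp; auto).
  unfold pivot_last, pivot_last_const. fold S0.
  eapply Rle_trans. apply cnorm_mul. rewrite Rmult_assoc.
  apply Rmult_le_compat_l. apply cnorm_ge0.
  eapply Rle_trans. apply cnorm_sub. nra.
Qed.

Lemma pivot_left_inverse :
  left_inverse N (S m) col pivot_extend (C * pivot_const + pivot_last_const).
Proof.
  pose proof Hk as [_ [_ [HC Hb]]]. pose proof pivot_const_ge0.
  assert (HCl : 0 <= pivot_last_const).
  { unfold pivot_last_const. apply Rmult_le_pos. apply cnorm_ge0.
    pose proof (sumR_cnorm_nonneg m (fun l => col l i0)). pose proof (Rmult_le_pos _ _ HC H). nra. }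
  split; [|split; [|split]].
  - apply pivot_extend_Clinear.
  - apply pivot_extend_kron.
  - pose proof (Rmult_le_pos _ _ HC H). lra.
  - intros j w Hj. pose proof (normN_ge0 N w). unfold pivot_extend. destruct (Nat.ltb_spec j m).
    + eapply Rle_trans. apply Hb; auto. pose proof (pivot_proj_bound w).
      assert (C * normN N (pivot_proj w) <= C * (pivot_const * normN N w))
        by (apply Rmult_le_compat_l; auto).
      nra.
    + pose proof (pivot_last_bound w). pose proof (Rmult_le_pos _ _ (Rmult_le_pos _ _ HC H) H0).
      nra.
Qed.

End Pivot.

Lemma lin_indep_left_inverse N m col :
  lin_indep N m col -> exists k C, left_inverse N m col k C.
Proof.
  revert col; induction m; intros col Hind.
  - exists (fun _ _ => C0), 0. split; [|split; [|split]]; intros; try lia. lra.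
  - destruct (lin_indep_pivot N m col Hind) as [i0 [Hi0 Hpiv]].
    destruct (IHm _ (pivot_proj_lin_indep N m i0 col Hi0 Hind)) as [k [C Hk]].
    eexists; eexists. exact (pivot_left_inverse N m i0 col Hi0 Hpiv k C Hk).
Qed.

(** * Derivatives of curves at [0] *)

Definition cderiv0 (g : R -> Cx) (z : Cx) : Prop :=
  derivable_pt_lim (fun t => Re (g t)) 0 (Re z) /\ derivable_pt_lim (fun t => Im (g t)) 0 (Im z).

Definition little_o_deriv0 (g : R -> Cx) (z : Cx) : Prop :=
  forall eps, eps > 0 -> exists del, del > 0 /\ forall t, Rabs t < del ->
    cnorm (Csub (Csub (g t) (g 0)) (Cmul (RtoC t) z)) <= eps * Rabs t.

Lemma derivable0_little_o f l : derivable_pt_lim f 0 l ->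
  forall eps, eps > 0 -> exists del, del > 0 /\
    forall t, Rabs t < del -> Rabs (f t - f 0 - t * l) <= eps * Rabs t.
Proof.
  intros H eps He. destruct (H eps He) as [d Hd]. exists d; split. apply cond_pos.
  intros t Ht. destruct (Req_dec t 0). subst. rewrite Rabs_R0.
  replace (f 0 - f 0 - 0 * l) with 0 by ring. rewrite Rabs_R0; lra.
  specialize (Hd t H0 Ht). replace (0 + t) with t in Hd by ring.
  replace (f t - f 0 - t * l) with (t * ((f t - f 0) / t - l)) by (field; auto).
  rewrite Rabs_mult. rewrite Rmult_comm. apply Rmult_le_compat_r. apply Rabs_pos. lra.
Qed.

Lemma little_o_derivable0 f l :
  (forall eps, eps > 0 -> exists del, del > 0 /\
     forall t, Rabs t < del -> Rabs (f t - f 0 - t * l) <= eps * Rabs t) ->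
  derivable_pt_lim f 0 l.
Proof.
  intros H eps He. destruct (H (eps/2) ltac:(lra)) as [d [Hd Ht]]. exists (mkposreal d Hd).
  intros h Hh0 Hh. simpl in Hh. specialize (Ht h Hh). replace (0 + h) with h by ring.
  replace ((f h - f 0) / h - l) with ((f h - f 0 - h * l) / h) by (field; auto).
  unfold Rdiv. rewrite Rabs_mult, Rabs_inv. pose proof (Rabs_pos_lt h Hh0).
  apply Rle_lt_trans with (eps / 2 * Rabs h * / Rabs h). apply Rmult_le_compat_r.
  left; apply Rinv_0_lt_compat; auto. auto. field_simplify; lra.
Qed.

Lemma cderiv0_little_o g z : cderiv0 g z -> little_o_deriv0 g z.
Proof.
  intros [H1 H2] eps He. destruct (derivable0_little_o _ _ H1 (eps/2) ltac:(lra)) as [d1 [Hd1 A]].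
  destruct (derivable0_little_o _ _ H2 (eps/2) ltac:(lra)) as [d2 [Hd2 B]].
  exists (Rmin d1 d2); split. apply Rmin_pos; auto. intros t Ht.
  specialize (A t ltac:(pose proof (Rmin_l d1 d2); lra)).
  specialize (B t ltac:(pose proof (Rmin_r d1 d2); lra)).
  unfold cnorm; simpl.
  replace (Re (g t) + - Re (g 0) + - (t * Re z - 0 * Im z))
    with (Re (g t) - Re (g 0) - t * Re z) by ring.
  replace (Im (g t) + - Im (g 0) + - (t * Im z + 0 * Re z))
    with (Im (g t) - Im (g 0) - t * Im z) by ring.
  lra.
Qed.

Lemma little_o_cderiv0 g z : little_o_deriv0 g z -> cderiv0 g z.
Proof.
  intros H; split; apply little_o_derivable0; intros eps He;
    destruct (H eps He) as [d [Hd A]]; exists d; split; auto;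
  intros t Ht; specialize (A t Ht); eapply Rle_trans; try apply A.
  - eapply Rle_trans; [|apply cnorm_Re]. simpl. right. f_equal. ring.
  - eapply Rle_trans; [|apply cnorm_Im]. simpl. right. f_equal. ring.
Qed.

Lemma cderiv0_unique g z1 z2 : cderiv0 g z1 -> cderiv0 g z2 -> z1 = z2.
Proof. intros [A B] [C D]. apply Cx_ext; eapply uniqueness_limite; eauto. Qed.

Lemma cderiv0_add g h a b :
  cderiv0 g a -> cderiv0 h b -> cderiv0 (fun t => Cadd (g t) (h t)) (Cadd a b).
Proof.
  intros [A B] [C D]; split; simpl.
  apply (derivable_pt_lim_plus (fun t => Re (g t)) (fun t => Re (h t))); auto.
  apply (derivable_pt_lim_plus (fun t => Im (g t)) (fun t => Im (h t))); auto.
Qed.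

Lemma cderiv0_const c : cderiv0 (fun _ => c) C0.
Proof. split; simpl; apply (derivable_pt_lim_const). Qed.

Lemma cderiv0_mul g h a b : cderiv0 g a -> cderiv0 h b ->
  cderiv0 (fun t => Cmul (g t) (h t)) (Cadd (Cmul a (h 0)) (Cmul (g 0) b)).
Proof.
  intros [A B] [C D]; split; simpl.
  - pose proof (derivable_pt_lim_mult _ _ _ _ _ A C).
    pose proof (derivable_pt_lim_mult _ _ _ _ _ B D).
    pose proof (derivable_pt_lim_minus _ _ _ _ _ H H0). unfold minus_fct, mult_fct in H1.
    replace (Re a * Re (h 0) - Im a * Im (h 0) + (Re (g 0) * Re b - Im (g 0) * Im b)) with
      (Re a * Re (h 0) + Re (g 0) * Re b - (Im a * Im (h 0) + Im (g 0) * Im b)) by ring. exact H1.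
  - pose proof (derivable_pt_lim_mult _ _ _ _ _ A D).
    pose proof (derivable_pt_lim_mult _ _ _ _ _ B C).
    pose proof (derivable_pt_lim_plus _ _ _ _ _ H H0). unfold plus_fct, mult_fct in H1.
    replace (Re a * Im (h 0) + Im a * Re (h 0) + (Re (g 0) * Im b + Im (g 0) * Re b)) with
      (Re a * Im (h 0) + Re (g 0) * Im b + (Im a * Re (h 0) + Im (g 0) * Re b)) by ring. exact H1.
Qed.

Lemma cderiv0_scal c g a : cderiv0 g a -> cderiv0 (fun t => Cmul c (g t)) (Cmul c a).
Proof.
  intros H. pose proof (cderiv0_mul _ _ _ _ (cderiv0_const c) H). simpl in H0.
  replace (Cmul c a) with (Cadd (Cmul C0 (g 0)) (Cmul c a)) by Cring. auto.
Qed.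

Lemma cderiv0_Rmul a : cderiv0 (fun t => Cmul (RtoC t) a) a.
Proof.
  apply little_o_cderiv0. intros eps He. exists 1; split; [lra|]. intros t _.
  replace (Csub (Csub (Cmul (RtoC t) a) (Cmul (RtoC 0) a)) (Cmul (RtoC t) a)) with C0 by Cring.
  rewrite cnorm_C0. pose proof (Rabs_pos t). nra.
Qed.

Lemma cderiv0_inv g a : cderiv0 g a -> g 0 <> C0 ->
  cderiv0 (fun t => Cinv (g t)) (Copp (Cmul a (Cmul (Cinv (g 0)) (Cinv (g 0))))).
Proof.
  intros [A B] Hg. pose proof (Cnorm2_neq0 _ Hg) as Hn.
  assert (Hq : derivable_pt_lim (fun t => Re (g t) * Re (g t) + Im (g t) * Im (g t)) 0
     (Re a * Re (g 0) + Re (g 0) * Re a + (Im a * Im (g 0) + Im (g 0) * Im a))).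
  { apply (derivable_pt_lim_plus (fun t => Re (g t) * Re (g t)) (fun t => Im (g t) * Im (g t)));
    [apply (derivable_pt_lim_mult (fun t => Re (g t)) (fun t => Re (g t))) |
     apply (derivable_pt_lim_mult (fun t => Im (g t)) (fun t => Im (g t)))]; auto.
    }
  split; unfold Cinv; simpl.
  - pose proof (derivable_pt_lim_div _ _ _ _ _ A Hq Hn). unfold div_fct in H.
    match goal with |- derivable_pt_lim _ 0 ?l => replace l with
      ((Re a * (Re (g 0) * Re (g 0) + Im (g 0) * Im (g 0)) -
        (Re a * Re (g 0) + Re (g 0) * Re a + (Im a * Im (g 0) + Im (g 0) * Im a)) * Re (g 0)) /
       (Re (g 0) * Re (g 0) + Im (g 0) * Im (g 0))²) end. exact H.
    unfold Rsqr. field; auto.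
  - pose proof (derivable_pt_lim_opp _ _ _ B).
    pose proof (derivable_pt_lim_div _ _ _ _ _ H Hq Hn). unfold div_fct, opp_fct in H0.
    match goal with |- derivable_pt_lim _ 0 ?l => replace l with
      ((- Im a * (Re (g 0) * Re (g 0) + Im (g 0) * Im (g 0)) -
        (Re a * Re (g 0) + Re (g 0) * Re a + (Im a * Im (g 0) + Im (g 0) * Im a)) * - Im (g 0)) /
       (Re (g 0) * Re (g 0) + Im (g 0) * Im (g 0))²) end. exact H0.
    unfold Rsqr. field; auto.
Qed.

Lemma cderiv0_ext g h a : (forall t, g t = h t) -> cderiv0 g a -> cderiv0 h a.
Proof. intros E H. replace h with g; auto. apply functional_extensionality; auto. Qed.

Lemma derivable0_near f g l r : r > 0 -> (forall t, Rabs t < r -> f t = g t) ->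
  derivable_pt_lim f 0 l -> derivable_pt_lim g 0 l.
Proof.
  intros Hr E H eps He. destruct (H eps He) as [d Hd].
  assert (Hm : 0 < Rmin d r) by (apply Rmin_pos; [apply cond_pos|auto]).
  exists (mkposreal _ Hm). intros h Hh0 Hh. simpl in Hh.
  pose proof (Rmin_l d r). pose proof (Rmin_r d r).
  rewrite <- !E. apply Hd; auto; lra. rewrite Rabs_R0; lra. replace (0 + h) with h by ring; lra.
Qed.

Lemma cderiv0_near g h a r : r > 0 -> (forall t, Rabs t < r -> g t = h t) ->
  cderiv0 g a -> cderiv0 h a.
Proof.
  intros Hr E [A B]; split; eapply derivable0_near; eauto; intros; simpl; rewrite E; auto.
Qed.

Definition vderiv0 (c : R -> CV) (v : CV) : Prop := forall i, cderiv0 (fun t => c t i) (v i).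

Lemma vderiv0_little_o N c v : vderiv0 c v ->
  forall eps, eps > 0 -> exists del, del > 0 /\ forall t, Rabs t < del ->
  normN N (vsub (vsub (c t) (c 0)) (vscale (RtoC t) v)) <= eps * Rabs t.
Proof.
  intros H. induction N; intros eps He.
  - exists 1; split; [lra|]. intros; simpl. unfold normN; simpl. pose proof (Rabs_pos t); nra.
  - destruct (IHN (eps/2) ltac:(lra)) as [d1 [Hd1 A]].
    destruct (cderiv0_little_o _ _ (H N) (eps/2) ltac:(lra)) as [d2 [Hd2 B]].
    exists (Rmin d1 d2); split. apply Rmin_pos; auto. intros t Ht.
    specialize (A t ltac:(pose proof (Rmin_l d1 d2); lra)).
    specialize (B t ltac:(pose proof (Rmin_r d1 d2); lra)).
    rewrite normN_eq in *. change (sumR (S N) ?F) with (sumR N F + F N). unfold vsub, vscale in *.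
    lra.
Qed.

(** * Holomorphic maps are Fréchet differentiable *)

Lemma MVT_affine_error (phi phi' : R -> R) s K e :
  (forall t, Rmin 0 s <= t <= Rmax 0 s ->
     derivable_pt_lim phi t (phi' t) /\ Rabs (phi' t - K) <= e) ->
  Rabs (phi s - phi 0 - s * K) <= e * Rabs s.
Proof.
  intros H. destruct (Rtotal_order s 0) as [Hs|[Hs|Hs]].
  - destruct (MVT_cor2 phi phi' s 0 Hs) as [c [E Hc]].
    { intros c Hc. apply H. rewrite Rmin_right, Rmax_left by lra. lra. }
    destruct (H c) as [_ Hb]. rewrite Rmin_right, Rmax_left by lra. lra.
    replace (phi s - phi 0 - s * K) with (- (phi 0 - phi s) - s * K) by ring. rewrite E.
    replace (- (phi' c * (0 - s)) - s * K) with ((phi' c - K) * s) by ring.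
    rewrite Rabs_mult. apply Rmult_le_compat_r. apply Rabs_pos. auto.
  - subst. replace (phi 0 - phi 0 - 0 * K) with 0 by ring. rewrite Rabs_R0. lra.
  - destruct (MVT_cor2 phi phi' 0 s Hs) as [c [E Hc]].
    { intros c Hc. apply H. rewrite Rmin_left, Rmax_right by lra. lra. }
    destruct (H c) as [_ Hb]. rewrite Rmin_left, Rmax_right by lra. lra.
    rewrite E. replace (phi' c * (s - 0) - s * K) with ((phi' c - K) * s) by ring.
    rewrite Rabs_mult. apply Rmult_le_compat_r. apply Rabs_pos. auto.
Qed.

Lemma derivable_pt_lim_shift f t l :
  derivable_pt_lim (fun h => f (t + h)) 0 l -> derivable_pt_lim f t l.
Proof.
  intros H eps He. destruct (H eps He) as [d Hd]. exists d. intros h Hh0 Hh.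
  specialize (Hd h Hh0 Hh). rewrite Rplus_0_l in Hd. rewrite Rplus_0_r in Hd. auto.
Qed.

Definition vline (y e : CV) (t : R) : CV := vadd y (vscale (RtoC t) e).

Lemma vline_shift y e t h : vadd (vline y e t) (vscale (RtoC h) e) = vline y e (t + h).
Proof. apply functional_extensionality; intros; unfold vline, vadd, vscale; Cring. Qed.

Lemma dderiv_on_line (g : CV -> Cx) y e t d :
  dderiv g (vline y e t) e d ->
  derivable_pt_lim (fun s => Re (g (vline y e s))) t (Re d) /\
  derivable_pt_lim (fun s => Im (g (vline y e s))) t (Im d).
Proof.
  intros [A B]. split; apply derivable_pt_lim_shift.
  - apply (derivable0_near (fun h => Re (g (vadd (vline y e t) (vscale (RtoC h) e)))) _ _ 1).
    lra. intros; rewrite vline_shift; reflexivity. exact A.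
  - apply (derivable0_near (fun h => Im (g (vadd (vline y e t) (vscale (RtoC h) e)))) _ _ 1).
    lra. intros; rewrite vline_shift; reflexivity. exact B.
Qed.

Lemma dderiv_segment_error (g : CV -> Cx) y e s (Dz : CV -> Cx) Dx e' :
  (forall t, Rmin 0 s <= t <= Rmax 0 s ->
     dderiv g (vline y e t) e (Dz (vline y e t)) /\ cnorm (Csub (Dz (vline y e t)) Dx) <= e') ->
  cnorm (Csub (Csub (g (vline y e s)) (g y)) (Cmul (RtoC s) Dx)) <= 2 * e' * Rabs s.
Proof.
  intros H. pose proof (vadd_scal0 y e) as Ey. fold (vline y e 0) in Ey.
  assert (A : Rabs (Re (g (vline y e s)) - Re (g (vline y e 0)) - s * Re Dx) <= e' * Rabs s).
  { apply (MVT_affine_error (fun t => Re (g (vline y e t))) (fun t => Re (Dz (vline y e t)))).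
    intros t Ht. destruct (H t Ht) as [Hd Hb]. split. apply (dderiv_on_line g y e t _ Hd).
    eapply Rle_trans; [|apply Hb]. eapply Rle_trans; [|apply cnorm_Re]. simpl. right. f_equal; ring.
    }
  assert (B : Rabs (Im (g (vline y e s)) - Im (g (vline y e 0)) - s * Im Dx) <= e' * Rabs s).
  { apply (MVT_affine_error (fun t => Im (g (vline y e t))) (fun t => Im (Dz (vline y e t)))).
    intros t Ht. destruct (H t Ht) as [Hd Hb]. split. apply (dderiv_on_line g y e t _ Hd).
    eapply Rle_trans; [|apply Hb]. eapply Rle_trans; [|apply cnorm_Im]. simpl. right. f_equal; ring.
    }
  rewrite Ey in A, B. unfold cnorm. simpl.
  replace (Re (g (vline y e s)) + - Re (g y) + - (s * Re Dx - 0 * Im Dx))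
    with (Re (g (vline y e s)) - Re (g y) - s * Re Dx) by ring.
  replace (Im (g (vline y e s)) + - Im (g y) + - (s * Im Dx + 0 * Re Dx))
    with (Im (g (vline y e s)) - Im (g y) - s * Im Dx) by ring.
  lra.
Qed.

Definition vtrunc (h : CV) (k : nat) : CV := fun j => if Nat.ltb j k then h j else C0.

Lemma vtrunc0 x h : vadd x (vtrunc h 0) = x.
Proof.
  apply functional_extensionality; intros j. unfold vadd, vtrunc. simpl. destruct (x j); Cring.
Qed.

Lemma vtrunc_supp h n : supp n h -> vtrunc h n = h.
Proof.
  intros H; apply functional_extensionality; intros j; unfold vtrunc.
  destruct (Nat.ltb_spec j n); auto. rewrite H; auto.
Qed.

Lemma vtrunc_line_re x h k t j :
  Csub (vline (vadd x (vtrunc h k)) (ebasis k) t j) (x j) =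
  if Nat.ltb j k then h j else if Nat.eqb j k then RtoC t else C0.
Proof.
  unfold vline, vadd, vscale, vtrunc, ebasis.
  destruct (Nat.ltb_spec j k); destruct (Nat.eqb_spec j k); try lia; Cring.
Qed.

Lemma vtrunc_line_im x h k t j :
  Csub (vline (vline (vadd x (vtrunc h k)) (ebasis k) (Re (h k))) (vscale Ci (ebasis k)) t j)
       (x j) =
  if Nat.ltb j k then h j else if Nat.eqb j k then mkC (Re (h k)) t else C0.
Proof.
  unfold vline, vadd, vscale, vtrunc, ebasis.
  destruct (Nat.ltb_spec j k); destruct (Nat.eqb_spec j k); try lia; Cring.
Qed.

Lemma vtrunc_S x h k :
  vadd x (vtrunc h (S k)) =
  vline (vline (vadd x (vtrunc h k)) (ebasis k) (Re (h k))) (vscale Ci (ebasis k)) (Im (h k)).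
Proof.
  apply functional_extensionality; intros j. unfold vline, vadd, vscale, vtrunc, ebasis.
  destruct (Nat.ltb_spec j (S k)), (Nat.ltb_spec j k), (Nat.eqb_spec j k); try lia; subst;
    try (destruct (h k); Cring); Cring.
Qed.

Lemma Csub_eq0 a b : Csub a b = C0 -> a = b.
Proof.
  intros E. assert (H1 := f_equal Re E); assert (H2 := f_equal Im E); simpl in *.
  apply Cx_ext; lra.
Qed.

Lemma cnorm_Ci_mul z : cnorm (Cmul Ci z) = cnorm z.
Proof.
  unfold cnorm; simpl. replace (0 * Re z - 1 * Im z) with (- Im z) by ring.
  replace (0 * Im z + 1 * Re z) with (Re z) by ring. rewrite Rabs_Ropp. ring.
Qed.

Lemma Rabs_between_0 s t : Rmin 0 s <= t <= Rmax 0 s -> Rabs t <= Rabs s.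
Proof.
  intros [A B]. unfold Rmin, Rmax in *. destruct (Rle_dec 0 s).
  - rewrite !Rabs_right by lra; lra.
  - rewrite !Rabs_left1 by lra; lra.
Qed.

Section PartialsStep.
Variables (n : nat) (G : CV -> Cx) (dG : nat -> CV -> Cx) (x h : CV) (e' : R).
Hypothesis Hgood : forall z,
  (forall j, (j < n)%nat -> cnorm (Csub (z j) (x j)) <= cnorm (h j)) ->
  (forall j, (n <= j)%nat -> z j = x j) -> forall k, (k < n)%nat ->
  dderiv G z (ebasis k) (dG k z) /\ dderiv G z (vscale Ci (ebasis k)) (Cmul Ci (dG k z)) /\
  cnorm (Csub (dG k z) (dG k x)) <= e'.

(* Move [Re (h k)] along [e_k], then [Im (h k)] along [i e_k], with the mean value theorem on
   each segment. *)
Lemma partials_affine_step k : (k < n)%nat ->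
  cnorm (Csub (Csub (G (vadd x (vtrunc h (S k)))) (G (vadd x (vtrunc h k)))) (Cmul (h k) (dG k x)))
    <= 2 * e' * cnorm (h k).
Proof.
  intros Hk. rewrite vtrunc_S.
  set (y := vadd x (vtrunc h k)) in *.
  set (y1 := vline y (ebasis k) (Re (h k))).
  assert (S1 : cnorm (Csub (Csub (G y1) (G y)) (Cmul (RtoC (Re (h k))) (dG k x)))
               <= 2 * e' * Rabs (Re (h k))).
  { apply (dderiv_segment_error G y (ebasis k) (Re (h k)) (dG k) (dG k x) e').
    intros t Ht. pose proof (vtrunc_line_re x h k t) as E. fold y in E.
    destruct (Hgood (vline y (ebasis k) t)) with (k := k) as [A [_ C]]; auto.
    - intros j Hj. rewrite E. destruct (Nat.ltb_spec j k); [lra|]. destruct (Nat.eqb_spec j k).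
      + subst. rewrite cnorm_RtoC. pose proof (Rabs_between_0 _ _ Ht).
        pose proof (cnorm_Re (h k)). lra.
      + rewrite cnorm_C0. apply cnorm_ge0.
    - intros j Hj. apply Csub_eq0. rewrite E.
      destruct (Nat.ltb_spec j k), (Nat.eqb_spec j k); auto; lia. }
  assert (S2 : cnorm (Csub (Csub (G (vline y1 (vscale Ci (ebasis k)) (Im (h k)))) (G y1))
                           (Cmul (RtoC (Im (h k))) (Cmul Ci (dG k x))))
               <= 2 * e' * Rabs (Im (h k))).
  { apply (dderiv_segment_error G y1 (vscale Ci (ebasis k)) (Im (h k))
             (fun z => Cmul Ci (dG k z)) (Cmul Ci (dG k x)) e').
    intros t Ht. pose proof (vtrunc_line_im x h k t) as E. fold y y1 in E.
    destruct (Hgood (vline y1 (vscale Ci (ebasis k)) t)) with (k := k) as [_ [B C]]; auto.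
    - intros j Hj. rewrite E. destruct (Nat.ltb_spec j k); [lra|]. destruct (Nat.eqb_spec j k).
      + subst. pose proof (Rabs_between_0 _ _ Ht). unfold cnorm; simpl. lra.
      + rewrite cnorm_C0. apply cnorm_ge0.
    - intros j Hj. apply Csub_eq0. rewrite E.
      destruct (Nat.ltb_spec j k), (Nat.eqb_spec j k); auto; lia.
    - split; auto.
      replace (Csub (Cmul Ci (dG k (vline y1 (vscale Ci (ebasis k)) t))) (Cmul Ci (dG k x)))
        with (Cmul Ci (Csub (dG k (vline y1 (vscale Ci (ebasis k)) t)) (dG k x))) by Cring.
      rewrite cnorm_Ci_mul. auto. }
  set (z2 := vline y1 (vscale Ci (ebasis k)) (Im (h k))) in *.
  replace (Csub (Csub (G z2) (G y)) (Cmul (h k) (dG k x))) with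
    (Cadd (Csub (Csub (G z2) (G y1)) (Cmul (RtoC (Im (h k))) (Cmul Ci (dG k x))))
          (Csub (Csub (G y1) (G y)) (Cmul (RtoC (Re (h k))) (dG k x))))
    by (destruct (h k); Cring).
  eapply Rle_trans. apply cnorm_add.
  replace (cnorm (h k)) with (Rabs (Re (h k)) + Rabs (Im (h k))) by reflexivity. lra.
Qed.

Lemma partials_affine_error : (forall j, (n <= j)%nat -> h j = C0) ->
  forall k, (k <= n)%nat ->
  cnorm (Csub (Csub (G (vadd x (vtrunc h k))) (G x)) (sumC k (fun j => Cmul (h j) (dG j x))))
    <= 2 * e' * sumR k (fun j => cnorm (h j)).
Proof.
  intros Hh. induction k; intros Hk.
  - simpl. rewrite vtrunc0. replace (Csub (Csub (G x) (G x)) C0) with C0 by Cring.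
    rewrite cnorm_C0. lra.
  - specialize (IHk ltac:(lia)). pose proof (partials_affine_step k ltac:(lia)) as Hstep.
    replace (Csub (Csub (G (vadd x (vtrunc h (S k)))) (G x)) (sumC (S k) (fun j => Cmul (h j) (dG j x))))
      with (Cadd (Csub (Csub (G (vadd x (vtrunc h (S k)))) (G (vadd x (vtrunc h k))))
                       (Cmul (h k) (dG k x)))
                 (Csub (Csub (G (vadd x (vtrunc h k))) (G x)) (sumC k (fun j => Cmul (h j) (dG j x)))))
      by (simpl; Cring).
    eapply Rle_trans. apply cnorm_add. change (sumR (S k) ?F) with (sumR k F + F k). lra.
Qed.

End PartialsStep.

Lemma finite_common_delta m (P : nat -> R -> Prop) :
  (forall j, (j < m)%nat -> exists d, d > 0 /\ P j d) ->
  (forall j d d', P j d -> 0 < d' <= d -> P j d') ->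
  exists d, d > 0 /\ forall j, (j < m)%nat -> P j d.
Proof.
  intros H Hm. induction m.
  - exists 1; split; [lra|]; intros; lia.
  - destruct IHm as [d1 [Hd1 A]]. intros; apply H; lia.
    destruct (H m ltac:(lia)) as [d2 [Hd2 B]].
    exists (Rmin d1 d2); split. apply Rmin_pos; auto. intros j Hj.
    pose proof (Rmin_l d1 d2); pose proof (Rmin_r d1 d2); pose proof (Rmin_pos _ _ Hd1 Hd2).
    destruct (Nat.eq_dec j m). subst. apply (Hm m d2); auto; lra. apply (Hm j d1); auto.
    apply A; lia.
Qed.

Lemma holo_map_frechet n N g D dg : is_open n D -> holo_map n N g D dg -> forall x, D x ->
  forall eps, eps > 0 -> exists del, del > 0 /\ forall h, supp n h -> normN n h < del ->
    D (vadd x h) /\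
    normN N (vsub (vsub (g (vadd x h)) (g x)) (vsum n h (fun j => dg j x))) <= eps * normN n h.
Proof.
  intros Hop Hh x Dx eps He.
  destruct (Hop x Dx) as [Sx [r [Hr Hball]]].
  set (e' := eps / (2 * INR N + 1)).
  assert (He' : e' > 0). { unfold e'. pose proof (pos_INR N). apply Rdiv_lt_0_compat; lra. }
  destruct (finite_common_delta n (fun j d => forall y, D y -> normN n (vsub y x) < d ->
                                     normN N (vsub (dg j y) (dg j x)) < e')) as [dc [Hdc Hc]].
  { intros j Hj. destruct (Hh x Dx j Hj) as [_ [_ C]]. destruct (C e' He') as [d [Hd Cd]].
    exists d; split; auto. }
  { intros j d d' A B y Dy Hy. apply A; auto; lra. }
  exists (Rmin r dc); split. apply Rmin_pos; auto. intros h Sh Hn.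
  pose proof (Rmin_l r dc); pose proof (Rmin_r r dc).
  assert (Hgood : forall z, (forall j, (j < n)%nat -> cnorm (Csub (z j) (x j)) <= cnorm (h j)) ->
             (forall j, (n <= j)%nat -> z j = x j) -> D z /\ normN n (vsub z x) < Rmin r dc).
  { intros z A B. assert (normN n (vsub z x) <= normN n h) by (apply normN_le_pointwise; auto).
    split; [|lra]. apply Hball. intros j Hj. rewrite B; auto. lra. }
  split.
  - apply Hgood. intros j Hj. unfold vadd.
    replace (Csub (Cadd (x j) (h j)) (x j)) with (h j) by (destruct (h j); Cring). lra.
    intros j Hj. unfold vadd. rewrite Sh; auto. destruct (x j); Cring.
  - rewrite normN_eq. apply Rle_trans with (sumR N (fun i => 2 * e' * normN n h)).
    + apply sumR_le. intros i Hi. unfold vsub at 1, vsum.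
      rewrite <- (vtrunc_supp h n Sh) at 1.
      rewrite normN_eq.
      apply (partials_affine_error n (fun y => g y i) (fun j y => dg j y i) x h e'); auto.
      intros z A B k Hk. destruct (Hgood z A B) as [Dz Hz]. destruct (Hh z Dz k Hk) as [P [Q _]].
      split; [apply P|split; [apply Q|]].
      left. apply Rle_lt_trans with (normN N (vsub (dg k z) (dg k x))).
      apply (normN_comp N (vsub (dg k z) (dg k x)) i Hi).
      apply Hc; auto. lra.
    + rewrite sumR_const. unfold e'. pose proof (pos_INR N). pose proof (normN_ge0 n h).
      replace (INR N * (2 * (eps / (2 * INR N + 1)) * normN n h))
        with ((2 * INR N / (2 * INR N + 1)) * (eps * normN n h)) by (field; lra).
      assert (2 * INR N / (2 * INR N + 1) <= 1). { apply Rmult_le_reg_r with (2 * INR N + 1). lra.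
      field_simplify; lra. }
      pose proof (Rmult_le_pos _ _ (Rlt_le _ _ He) H2). nra.
Qed.

(** * Tangent spaces of charts *)

Lemma cderiv0_eq0_near g z r :
  r > 0 -> (forall t, Rabs t < r -> g t = C0) -> cderiv0 g z -> z = C0.
Proof.
  intros Hr E H. apply (cderiv0_unique g); auto.
  apply (cderiv0_near (fun _ => C0) g C0 r); auto.
  - intros; rewrite E; auto.
  - apply cderiv0_const.
Qed.

Lemma tangent_supp (S : CV -> Prop) N p v :
  (forall y, S y -> supp N y) -> tangent S p v -> supp N v.
Proof.
  intros HS [c [eps [He [_ [Hin Hd]]]]] i Hi.
  apply (cderiv0_eq0_near (fun t => c t i) _ eps); auto.
  - intros t Ht. apply (HS _ (Hin t Ht)); auto.
  - apply Hd.
Qed.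

Lemma normN_RtoC_lt n b t d :
  Rabs t < d / (normN n b + 1) -> normN n (vscale (RtoC t) b) < d.
Proof.
  intros Ht. pose proof (normN_ge0 n b). pose proof (Rabs_pos t).
  rewrite normN_RtoC. apply Rle_lt_trans with (Rabs t * (normN n b + 1)). nra.
  apply Rmult_lt_reg_r with (/ (normN n b + 1)). apply Rinv_0_lt_compat; lra.
  replace (Rabs t * (normN n b + 1) * / (normN n b + 1)) with (Rabs t) by (field; lra). exact Ht.
Qed.

Lemma is_open_line n D x b : is_open n D -> D x -> supp n b ->
  exists r, r > 0 /\ forall t, Rabs t < r -> D (vadd x (vscale (RtoC t) b)).
Proof.
  intros Hop Dx Sb. destruct (Hop x Dx) as [Sx [r [Hr B]]].
  exists (r / (normN n b + 1)). split. apply Rdiv_lt_0_compat; pose proof (normN_ge0 n b); lra.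
  intros t Ht. apply B.
  - intros j Hj. unfold vadd, vscale. rewrite Sx, Sb by auto. Cring.
  - replace (vsub (vadd x (vscale (RtoC t) b)) x) with (vscale (RtoC t) b)
      by (apply functional_extensionality; intros; unfold vsub, vadd, vscale; Cring).
    apply normN_RtoC_lt; auto.
Qed.

Lemma ebasis_supp n j : (j < n)%nat -> supp n (ebasis j).
Proof. intros Hj i Hi. unfold ebasis. destruct (Nat.eqb_spec i j); auto; lia. Qed.

Lemma holo_deriv_supp n N (S : CV -> Prop) phi D dphi x j i :
  is_open n D -> holo_map n N phi D dphi -> (forall y, S y -> supp N y) ->
  (forall x, D x -> S (phi x)) -> D x -> (j < n)%nat -> (N <= i)%nat -> dphi j x i = C0.
Proof.
  intros Hop Hh HS HD Dx Hj Hi. destruct (Hh x Dx j Hj) as [A _].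
  destruct (is_open_line n D x (ebasis j) Hop Dx (ebasis_supp n j Hj)) as [r [Hr Hline]].
  apply (cderiv0_eq0_near (fun t => phi (vadd x (vscale (RtoC t) (ebasis j))) i) _ r); auto.
  - intros t Ht. apply (HS _ (HD _ (Hline t Ht))); auto.
  - apply (A i).
Qed.

Definition coeffs (n : nat) (k : nat -> CV -> Cx) (w : CV) : CV :=
  fun j => if Nat.ltb j n then k j w else C0.

Lemma coeffs_supp n k w : supp n (coeffs n k w).
Proof. intros j Hj. unfold coeffs. destruct (Nat.ltb_spec j n); auto; lia. Qed.

Section Coefficients.
Variables (N n : nat) (col : nat -> CV) (k : nat -> CV -> Cx) (C : R).
Hypothesis Hk : left_inverse N n col k C.

Lemma normN_coeffs w : normN n (coeffs n k w) <= INR n * C * normN N w.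
Proof.
  destruct Hk as [_ [_ [_ Hb]]].
  rewrite normN_eq, Rmult_assoc, <- sumR_const. apply sumR_le. intros j Hj.
  unfold coeffs. destruct (Nat.ltb_spec j n); try lia. auto.
Qed.

Lemma coeffs_vsum h : supp n h -> coeffs n k (vsum n h col) = h.
Proof.
  destruct Hk as [Hl [Hd _]]. intros Sh. apply functional_extensionality; intros j. unfold coeffs.
  destruct (Nat.ltb_spec j n).
  - rewrite Clinear_vsum by auto.
    rewrite (sumC_ext n _ (fun l => Cmul (h l) (kron j l))) by (intros; rewrite Hd; auto).
    apply sumC_kron; auto.
  - rewrite Sh; auto; lia.
Qed.

Lemma coeffs_sub u w : coeffs n k (vsub u w) = vsub (coeffs n k u) (coeffs n k w).
Proof.
  destruct Hk as [Hl _]. apply functional_extensionality; intros j; unfold coeffs, vsub.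
  destruct (Nat.ltb_spec j n). apply Clinear_sub; auto. Cring.
Qed.

Lemma coeffs_scal a w : coeffs n k (vscale a w) = vscale a (coeffs n k w).
Proof.
  destruct Hk as [Hl _]. apply functional_extensionality; intros j; unfold coeffs, vscale.
  destruct (Nat.ltb_spec j n). apply (Hl j); auto. Cring.
Qed.

End Coefficients.

Lemma le_mul_all_pos_eq0 x C :
  0 <= x -> 0 <= C -> (forall eta, eta > 0 -> x <= C * eta) -> x = 0.
Proof.
  intros H HC A. destruct H as [H|]; auto.
  specialize (A (x / (2 * (C + 1))) ltac:(apply Rdiv_lt_0_compat; lra)).
  assert (C * (x / (2 * (C + 1))) <= x / 2).
  { replace (x / 2) with ((C + 1) * (x / (2 * (C + 1)))) by (field; lra).
    apply Rmult_le_compat_r. apply Rlt_le, Rdiv_lt_0_compat; lra. lra. }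
  lra.
Qed.

Lemma exists_small_pos a b r K : 0 < a -> 0 < b -> 0 < r -> 1 <= K ->
  exists t, 0 < t /\ t < a /\ t < b /\ t * K < r.
Proof.
  intros Ha Hb Hr HK.
  assert (Hm : 0 < Rmin (Rmin a b) (r / K))
    by (repeat apply Rmin_pos; auto; apply Rdiv_lt_0_compat; lra).
  pose proof (Rmin_l (Rmin a b) (r / K)); pose proof (Rmin_r (Rmin a b) (r / K)).
  pose proof (Rmin_l a b); pose proof (Rmin_r a b).
  set (m := Rmin (Rmin a b) (r / K)) in *.
  assert (m * K <= r).
  { apply Rle_trans with (r / K * K). apply Rmult_le_compat_r; lra. right; field; lra. }
  exists (m / 2). repeat split; lra.
Qed.

Section ChartTangent.
Variables (n N : nat) (S : CV -> Prop) (phi : CV -> CV) (D W : CV -> Prop).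
Variables (dphi : nat -> CV -> CV) (x : CV) (k : nat -> CV -> Cx) (Ck : R).
Hypothesis HopD : is_open n D.
Hypothesis HopW : is_open N W.
Hypothesis Hh : holo_map n N phi D dphi.
Hypothesis HS : forall y, S y -> supp N y.
Hypothesis HDW : forall x, D x -> S (phi x) /\ W (phi x).
Hypothesis Hsurj : forall y, S y -> W y -> exists x, D x /\ phi x = y.
Hypothesis Hinv : forall eps, eps > 0 -> exists del, del > 0 /\ forall x', D x' ->
  normN N (vsub (phi x') (phi x)) < del -> normN n (vsub x' x) < eps.
Hypothesis Dx : D x.
Hypothesis Hk : left_inverse N n (fun j => dphi j x) k Ck.

Let col := fun j => dphi j x.

Lemma tangent_chart_preimage v c eps : curve_in S (phi x) v c eps ->
  forall e0 e1, e0 > 0 -> e1 > 0 -> exists t h, t > 0 /\ supp n h /\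
    normN N (vsub (vsub (c t) (phi x)) (vscale (RtoC t) v)) <= e1 * t /\
    normN N (vsub (vsub (c t) (phi x)) (vsum n h col)) <= e0 * normN n h.
Proof.
  intros [Heps [Hc0 [Hin Hvd]]] e0 e1 He0 He1.
  set (K := normN N v + e1 + 1).
  assert (HK : 1 <= K) by (unfold K; pose proof (normN_ge0 N v); lra).
  destruct (vderiv0_little_o N c v (fun i => Hvd i) e1 He1) as [d1 [Hd1 V1]].
  destruct (HopW (phi x) (proj2 (HDW x Dx))) as [_ [rW [HrW BW]]].
  destruct (holo_map_frechet n N phi D dphi HopD Hh x Dx e0 He0) as [dF [HdF F]].
  destruct (Hinv dF HdF) as [dI [HdI I]].
  destruct (exists_small_pos eps d1 (Rmin rW dI) K Heps Hd1 ltac:(apply Rmin_pos; auto) HK)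
    as [t [Ht [Hte [Htd1 HtK]]]].
  pose proof (Rmin_l rW dI); pose proof (Rmin_r rW dI).
  assert (Hat : Rabs t = t) by (apply Rabs_right; lra).
  specialize (V1 t ltac:(lra)). rewrite Hat, Hc0 in V1.
  assert (Hct : normN N (vsub (c t) (phi x)) < Rmin rW dI).
  { replace (vsub (c t) (phi x)) with
      (vadd (vsub (vsub (c t) (phi x)) (vscale (RtoC t) v)) (vscale (RtoC t) v))
      by (apply functional_extensionality; intros; unfold vadd, vsub, vscale; Cring).
    eapply Rle_lt_trans. apply normN_triang. rewrite normN_RtoC, Hat. unfold K in HtK. nra. }
  assert (Sct : S (c t)) by (apply Hin; lra).
  assert (Wct : W (c t)) by (apply BW; [apply HS; auto | lra]).
  destruct (Hsurj _ Sct Wct) as [xt [Dxt Ext]].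
  assert (Hxt : normN n (vsub xt x) < dF) by (apply I; auto; rewrite Ext; lra).
  set (h := vsub xt x) in *.
  assert (Sh : supp n h).
  { intros j Hj. unfold h, vsub. rewrite (proj1 (HopD xt Dxt)), (proj1 (HopD x Dx)) by auto. Cring.
    }
  destruct (F h Sh Hxt) as [_ Fb].
  replace (vadd x h) with xt in Fb
    by (apply functional_extensionality; intros; unfold h, vadd, vsub; destruct (xt x0); Cring).
  rewrite Ext in Fb. exists t, h. auto.
Qed.

(* The left inverse bounds [h] by [O(t)], so [t v] and [dphi(x) h] agree to [o(t)]. *)
Lemma tangent_span_approx v : tangent S (phi x) v ->
  forall eta, eta > 0 -> exists t h, t > 0 /\ supp n h /\
    normN N (vsub (vscale (RtoC t) v) (vsum n h col)) <= eta * t.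
Proof.
  intros [c [eps Hc]] eta Heta.
  set (A := INR n * Ck).
  assert (HA : 0 <= A) by (destruct Hk as [_ [_ [HC _]]]; unfold A; pose proof (pos_INR n); nra).
  set (K := normN N v + eta / 2).
  assert (HK : 0 <= K) by (unfold K; pose proof (normN_ge0 N v); lra).
  set (e0 := Rmin (1 / (2 * A + 1)) (eta / (4 * A * K + 2))).
  assert (He0 : e0 > 0) by (apply Rmin_pos; apply Rdiv_lt_0_compat; nra).
  assert (He0A : A * e0 <= 1 / 2).
  { apply Rle_trans with (A * (1 / (2 * A + 1))).
    - apply Rmult_le_compat_l; auto. apply Rmin_l.
    - apply Rmult_le_reg_r with (2 * A + 1). lra. field_simplify; lra. }
  assert (He0K : e0 * (2 * A * K) <= eta / 2).
  { apply Rle_trans with (eta / (4 * A * K + 2) * (2 * A * K)).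
    - apply Rmult_le_compat_r. nra. apply Rmin_r.
    - apply Rmult_le_reg_r with (4 * A * K + 2). nra. field_simplify; nra. }
  destruct (tangent_chart_preimage v c eps Hc e0 (eta / 2) He0 ltac:(lra))
    as [t [h [Ht [Sh [Hv Hf]]]]].
  set (d := vsub (c t) (phi x)) in *.
  assert (Hd : normN N d <= K * t).
  { replace d with (vadd (vsub d (vscale (RtoC t) v)) (vscale (RtoC t) v))
      by (apply functional_extensionality; intros; unfold vadd, vsub, vscale; Cring).
    eapply Rle_trans. apply normN_triang. rewrite normN_RtoC, Rabs_right by lra. unfold K. lra. }
  assert (Hhb : normN n h <= 2 * A * K * t).
  { assert (normN n h <= A * normN N (vsum n h col)).
    { rewrite <- (coeffs_vsum N n col k Ck Hk h Sh) at 1. apply (normN_coeffs N n col k Ck Hk). }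
    assert (normN N (vsum n h col) <= K * t + e0 * normN n h).
    { replace (vsum n h col) with (vsub d (vsub d (vsum n h col)))
        by (apply functional_extensionality; intros; unfold vsub; Cring).
      eapply Rle_trans. apply normN_sub. lra. }
    pose proof (normN_ge0 n h). nra. }
  exists t, h. split; [lra | split; auto].
  replace (vsub (vscale (RtoC t) v) (vsum n h col)) with
    (vadd (vsub (vscale (RtoC t) v) d) (vsub d (vsum n h col)))
    by (apply functional_extensionality; intros; unfold vadd, vsub; Cring).
  eapply Rle_trans. apply normN_triang. rewrite normN_sub_sym.
  assert (e0 * normN n h <= e0 * (2 * A * K * t)) by (apply Rmult_le_compat_l; lra).
  nra.
Qed.

Lemma chart_tangent_in_span v : tangent S (phi x) v -> v = vsum n (coeffs n k v) col.
Proof.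
  intros Htan.
  set (P := fun w => vsum n (coeffs n k w) col).
  set (Pn := sumR n (fun j => normN N (col j)) * (INR n * Ck)).
  assert (HPn : 0 <= Pn).
  { destruct Hk as [_ [_ [HC _]]]. unfold Pn. pose proof (pos_INR n).
    apply Rmult_le_pos; [|apply Rmult_le_pos; auto].
    apply sumR_nonneg; intros; apply normN_ge0. }
  assert (HPb : forall w, normN N (P w) <= Pn * normN N w).
  { intros w. unfold P. eapply Rle_trans. apply normN_vsum.
    unfold Pn. rewrite Rmult_assoc. apply Rmult_le_compat_l.
    - apply sumR_nonneg; intros; apply normN_ge0.
    - apply (normN_coeffs N n col k Ck Hk). }
  (* [id - P] kills [dphi(x) h], so it maps [t v - dphi(x) h] to [t (v - P v)]. *)
  assert (Hmain : normN N (vsub v (P v)) = 0).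
  { apply (le_mul_all_pos_eq0 _ (1 + Pn)). apply normN_ge0. lra. intros eta Heta.
    destruct (tangent_span_approx v Htan eta Heta) as [t [h [Ht [Sh Hth]]]].
    set (e := vsub (vscale (RtoC t) v) (vsum n h col)) in *.
    assert (HPe : vsub e (P e) = vscale (RtoC t) (vsub v (P v))).
    { unfold e, P. rewrite (coeffs_sub N n col k Ck Hk), vsum_sub,
        (coeffs_vsum N n col k Ck Hk h Sh), (coeffs_scal N n col k Ck Hk), vsum_scal.
      apply functional_extensionality; intros; unfold vsub, vscale; Cring. }
    assert (normN N (vscale (RtoC t) (vsub v (P v))) <= (1 + Pn) * normN N e).
    { rewrite <- HPe. eapply Rle_trans. apply normN_sub. pose proof (HPb e). lra. }
    rewrite normN_RtoC, Rabs_right in H by lra.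
    apply Rmult_le_reg_l with t; auto. nra. }
  apply functional_extensionality; intros i. destruct (Nat.ltb_spec i N).
  - pose proof (normN_zero N _ Hmain i H) as Hi. unfold vsub in Hi. fold (P v).
    replace (v i) with (Cadd (Csub (v i) (P v i)) (P v i)) by Cring. rewrite Hi. Cring.
  - rewrite (tangent_supp S N (phi x) v HS Htan) by lia.
    unfold vsum. rewrite sumC_zero; auto. intros j Hj. unfold col.
    rewrite (holo_deriv_supp n N S phi D dphi x j i HopD Hh HS) by (auto; intros; apply HDW; auto).
    Cring.
Qed.

End ChartTangent.

Lemma chart_line_curve n N (S : CV -> Prop) phi D dphi x b :
  is_open n D -> holo_map n N phi D dphi -> (forall y, S y -> supp N y) ->
  (forall x, D x -> S (phi x)) -> D x -> supp n b ->
  exists eps, curve_in S (phi x) (vsum n b (fun j => dphi j x))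
                (fun t => phi (vadd x (vscale (RtoC t) b))) eps.
Proof.
  intros HopD Hh HS HD Dx Sb.
  assert (Shb : forall t, supp n (vscale (RtoC t) b)).
  { intros t j Hj. unfold vscale. rewrite Sb by auto. Cring. }
  pose proof (normN_ge0 n b) as Hb0.
  destruct (is_open_line n D x b HopD Dx Sb) as [r [Hr Hline]].
  exists r. split; [auto | split; [|split]].
  - rewrite vadd_scal0; auto.
  - intros t Ht. apply HD, Hline, Ht.
  - intros i. apply little_o_cderiv0. intros e He. rewrite vadd_scal0.
    destruct (Nat.ltb_spec i N).
    + destruct (holo_map_frechet n N phi D dphi HopD Hh x Dx (e / (normN n b + 1)))
        as [dF [HdF F]]; [apply Rdiv_lt_0_compat; lra|].
      exists (dF / (normN n b + 1)). split. apply Rdiv_lt_0_compat; lra. intros t Ht.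
      destruct (F _ (Shb t) (normN_RtoC_lt n b t dF Ht)) as [_ Fb].
      rewrite vsum_scal, normN_RtoC in Fb.
      eapply Rle_trans.
      { apply (normN_comp N (vsub (vsub (phi (vadd x (vscale (RtoC t) b))) (phi x))
                 (vscale (RtoC t) (vsum n b (fun j => dphi j x)))) i H). }
      eapply Rle_trans. apply Fb.
      assert (e / (normN n b + 1) * normN n b <= e).
      { apply Rmult_le_reg_r with (normN n b + 1). lra.
        replace (e / (normN n b + 1) * normN n b * (normN n b + 1)) with (e * normN n b)
          by (field; lra).
        nra. }
      pose proof (Rabs_pos t). nra.
    + exists r. split; auto. intros t Ht.
      rewrite (HS _ (HD _ (Hline t Ht))), (HS _ (HD _ Dx)) by auto.
      unfold vsum. rewrite sumC_zero.
      * replace (Csub (Csub C0 C0) (Cmul (RtoC t) C0)) with C0 by Cring.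
        rewrite cnorm_C0. pose proof (Rabs_pos t). nra.
      * intros j Hj. rewrite (holo_deriv_supp n N S phi D dphi x j i) by auto. Cring.
Qed.

Definition cont_at (n : nat) (D : CV -> Prop) (x0 : CV) (g : CV -> Cx) : Prop :=
  forall eps, eps > 0 -> exists del, del > 0 /\ forall y, D y -> normN n (vsub y x0) < del ->
    cnorm (Csub (g y) (g x0)) < eps.

Section ContAt.
Variables (n : nat) (D : CV -> Prop) (x0 : CV).

Lemma cont_at_const c : cont_at n D x0 (fun _ => c).
Proof.
  intros e He. exists 1; split; [lra|]. intros.
  replace (Csub c c) with C0 by Cring. rewrite cnorm_C0; lra.
Qed.

Lemma cont_at_const_on g : (forall y, D y -> g y = C0) -> D x0 -> cont_at n D x0 g.
Proof.
  intros H Dx e He. exists 1; split; [lra|]. intros y Dy _. rewrite !H by auto.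
  replace (Csub C0 C0) with C0 by Cring. rewrite cnorm_C0; lra.
Qed.

Lemma cont_at_add g h :
  cont_at n D x0 g -> cont_at n D x0 h -> cont_at n D x0 (fun y => Cadd (g y) (h y)).
Proof.
  intros A B e He.
  destruct (A (e/2) ltac:(lra)) as [d1 [Hd1 A']]. destruct (B (e/2) ltac:(lra)) as [d2 [Hd2 B']].
  exists (Rmin d1 d2); split. apply Rmin_pos; auto. intros y Dy Hy.
  pose proof (Rmin_l d1 d2); pose proof (Rmin_r d1 d2).
  specialize (A' y Dy ltac:(lra)). specialize (B' y Dy ltac:(lra)).
  replace (Csub (Cadd (g y) (h y)) (Cadd (g x0) (h x0)))
    with (Cadd (Csub (g y) (g x0)) (Csub (h y) (h x0))) by Cring.
  eapply Rle_lt_trans. apply cnorm_add. lra.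
Qed.

Lemma cont_at_opp g : cont_at n D x0 g -> cont_at n D x0 (fun y => Copp (g y)).
Proof.
  intros A e He. destruct (A e He) as [d [Hd A']]. exists d; split; auto. intros y Dy Hy.
  replace (Csub (Copp (g y)) (Copp (g x0))) with (Copp (Csub (g y) (g x0))) by Cring.
  rewrite cnorm_opp; auto.
Qed.

Lemma cont_at_sub g h :
  cont_at n D x0 g -> cont_at n D x0 h -> cont_at n D x0 (fun y => Csub (g y) (h y)).
Proof. intros. unfold Csub. apply cont_at_add; auto. apply cont_at_opp; auto. Qed.

Lemma cont_at_conj g : cont_at n D x0 g -> cont_at n D x0 (fun y => Cconj (g y)).
Proof.
  intros A e He. destruct (A e He) as [d [Hd A']]. exists d; split; auto. intros y Dy Hy.
  replace (Csub (Cconj (g y)) (Cconj (g x0))) with (Cconj (Csub (g y) (g x0))) by Cring.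
  rewrite cnorm_conj; auto.
Qed.

Lemma cont_at_mul g h :
  cont_at n D x0 g -> cont_at n D x0 h -> cont_at n D x0 (fun y => Cmul (g y) (h y)).
Proof.
  intros A B e He.
  set (a := cnorm (g x0)). set (b := cnorm (h x0)).
  assert (Ha : 0 <= a) by apply cnorm_ge0. assert (Hb : 0 <= b) by apply cnorm_ge0.
  set (e1 := Rmin 1 (e / (a + b + 2))).
  assert (He1 : 0 < e1) by (apply Rmin_pos; [lra | apply Rdiv_lt_0_compat; lra]).
  assert (He11 : e1 <= 1) by apply Rmin_l.
  assert (Hee : e1 * (a + b + 2) <= e).
  { apply Rle_trans with (e / (a + b + 2) * (a + b + 2)).
    - apply Rmult_le_compat_r; [lra | apply Rmin_r].
    - right; field; lra. }
  destruct (A e1 He1) as [d1 [Hd1 A']]. destruct (B e1 He1) as [d2 [Hd2 B']].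
  exists (Rmin d1 d2); split. apply Rmin_pos; auto. intros y Dy Hy.
  pose proof (Rmin_l d1 d2); pose proof (Rmin_r d1 d2).
  specialize (A' y Dy ltac:(lra)). specialize (B' y Dy ltac:(lra)).
  set (u := Csub (g y) (g x0)) in *. set (w := Csub (h y) (h x0)) in *.
  replace (Csub (Cmul (g y) (h y)) (Cmul (g x0) (h x0)))
    with (Cadd (Cadd (Cmul u (h x0)) (Cmul (g x0) w)) (Cmul u w)) by (unfold u, w; Cring).
  pose proof (cnorm_ge0 u). pose proof (cnorm_ge0 w).
  assert (cnorm (Cmul u (h x0)) <= e1 * b).
  { eapply Rle_trans. apply cnorm_mul. apply Rmult_le_compat_r; lra. }
  assert (cnorm (Cmul (g x0) w) <= a * e1).
  { eapply Rle_trans. apply cnorm_mul. apply Rmult_le_compat_l; lra. }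
  assert (cnorm (Cmul u w) < e1).
  { eapply Rle_lt_trans. apply cnorm_mul.
    apply Rle_lt_trans with (e1 * cnorm w). apply Rmult_le_compat_r; lra. nra. }
  pose proof (cnorm_add (Cadd (Cmul u (h x0)) (Cmul (g x0) w)) (Cmul u w)).
  pose proof (cnorm_add (Cmul u (h x0)) (Cmul (g x0) w)).
  lra.
Qed.

Lemma cont_at_sumC m F :
  (forall j, (j < m)%nat -> cont_at n D x0 (F j)) ->
  cont_at n D x0 (fun y => sumC m (fun j => F j y)).
Proof.
  induction m; intros H; simpl.
  - apply cont_at_const.
  - apply (cont_at_add (fun y => sumC m (fun j => F j y)) (F m)).
    + apply IHm; intros; apply H; lia.
    + apply H; lia.
Qed.

Lemma cont_at_Omega A B :
  (forall i, cont_at n D x0 (fun y => A y i)) -> (forall i, cont_at n D x0 (fun y => B y i)) ->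
  forall k, cont_at n D x0 (fun y => Omega k (A y) (B y)).
Proof.
  intros HA HB k. unfold Omega.
  apply (cont_at_sumC k
    (fun i y => Csub (Cmul (A y i) (B y (k + i)%nat)) (Cmul (A y (k + i)%nat) (B y i)))).
  intros. apply cont_at_sub; apply cont_at_mul; auto.
Qed.

Lemma cont_at_hgamma_entry A B :
  (forall i, cont_at n D x0 (fun y => A y i)) -> (forall i, cont_at n D x0 (fun y => B y i)) ->
  forall k, cont_at n D x0 (fun y => hOmega k (A y) (tau (B y))).
Proof.
  intros HA HB k. unfold hOmega.
  assert (HtB : forall i, cont_at n D x0 (fun y => tau (B y) i))
    by (intros; unfold tau; apply cont_at_conj; auto).
  apply cont_at_add.
  - apply cont_at_sub; apply cont_at_mul; auto.
  - apply (cont_at_Omega (fun y => shift2 (A y)) (fun y => shift2 (tau (B y))));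
      intros; [apply HA | apply HtB].
Qed.

End ContAt.

Lemma holo_map_cont_at n N g D dg x0 : is_open n D -> holo_map n N g D dg -> D x0 ->
  forall i, (i < N)%nat -> cont_at n D x0 (fun y => g y i).
Proof.
  intros HopD Hh Dx i Hi e He.
  destruct (holo_map_frechet n N g D dg HopD Hh x0 Dx 1 ltac:(lra)) as [dF [HdF F]].
  set (CJ := sumR n (fun j => normN N (dg j x0))).
  assert (HCJ : 0 <= CJ) by (apply sumR_nonneg; intros; apply normN_ge0).
  exists (Rmin dF (e / (CJ + 2))). split. apply Rmin_pos; auto. apply Rdiv_lt_0_compat; lra.
  intros y Dy Hy. pose proof (Rmin_l dF (e / (CJ + 2))). pose proof (Rmin_r dF (e / (CJ + 2))).
  set (h := vsub y x0) in *.
  assert (Sh : supp n h).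
  { intros j Hj. unfold h, vsub. rewrite (proj1 (HopD y Dy)), (proj1 (HopD x0 Dx)) by auto. Cring. }
  destruct (F h Sh ltac:(lra)) as [_ Fb].
  replace (vadd x0 h) with y in Fb
    by (apply functional_extensionality; intros; unfold h, vadd, vsub; destruct (y x); Cring).
  pose proof (normN_vsum N n h (fun j => dg j x0)) as HJ. cbv beta in HJ. fold CJ in HJ.
  assert (Hg : normN N (vsub (g y) (g x0)) <= (CJ + 1) * normN n h).
  { replace (vsub (g y) (g x0)) with
      (vadd (vsub (vsub (g y) (g x0)) (vsum n h (fun j => dg j x0))) (vsum n h (fun j => dg j x0)))
      by (apply functional_extensionality; intros; unfold vadd, vsub; Cring).
    eapply Rle_trans. apply normN_triang. lra. }
  eapply Rle_lt_trans. apply (normN_comp N (vsub (g y) (g x0)) i Hi).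
  assert (Hsmall : (CJ + 2) * normN n h < e).
  { apply Rlt_le_trans with ((CJ + 2) * (e / (CJ + 2))).
    - apply Rmult_lt_compat_l; lra.
    - right; field; lra. }
  eapply Rle_lt_trans. apply Hg. pose proof (normN_ge0 n h). lra.
Qed.

Lemma Clinear_bounded_local k C m u w : Clinear k -> (forall w, cnorm (k w) <= C * normN m w) ->
  (forall i, (i < m)%nat -> u i = w i) -> k u = k w.
Proof.
  intros Hl Hb E.
  assert (Hz : normN m (vsub u w) = 0).
  { rewrite normN_eq, (sumR_ext m _ (fun _ => 0)), sumR_const. ring.
    intros i Hi. unfold vsub. rewrite E by auto. replace (Csub (w i) (w i)) with C0 by Cring.
    apply cnorm_C0. }
  assert (k (vsub u w) = C0).
  { apply cnorm_eq0, Rle_antisym; [|apply cnorm_ge0]. rewrite <- (Rmult_0_r C), <- Hz. apply Hb. }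
  rewrite Clinear_sub in H by auto.
  replace (k u) with (Cadd (Csub (k u) (k w)) (k w)) by Cring. rewrite H. apply Cadd_0_l.
Qed.

Definition perturb_tol (m : nat) (C : R) : R := 1 / (2 * (INR m * INR m * C + 1)).

Lemma perturb_tol_pos m C : 0 <= C -> 0 < perturb_tol m C.
Proof.
  intros HC. unfold perturb_tol. pose proof (pos_INR m).
  assert (0 <= INR m * INR m * C) by (apply Rmult_le_pos; nra). apply Rdiv_lt_0_compat; lra.
Qed.

(* With [M a = 0], [a = k (M0 a) = k ((M0 - M) a)], whose norm is at most half that of [a]. *)
Lemma lin_indep_perturb m (M0 M : nat -> nat -> Cx) k C :
  left_inverse m m (fun l kk => M0 kk l) k C ->
  (forall kk l, (kk < m)%nat -> (l < m)%nat ->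
     cnorm (Csub (M kk l) (M0 kk l)) <= perturb_tol m C) ->
  lin_indep m m (fun l kk => M kk l).
Proof.
  intros HL Hd a Ha.
  pose proof HL as [Hlin [Hdel [HC Hb]]].
  pose proof (perturb_tol_pos m C HC) as Hdl. set (dl := perturb_tol m C) in *.
  set (r := fun kk => sumC m (fun l => Cmul (a l) (Csub (M0 kk l) (M kk l)))).
  assert (Hr : forall j, (j < m)%nat -> a j = k j r).
  { intros j Hj. transitivity (k j (vsum m a (fun l kk => M0 kk l))).
    - rewrite Clinear_vsum by auto.
      rewrite (sumC_ext m _ (fun l => Cmul (a l) (kron j l))) by (intros; rewrite Hdel; auto).
      symmetry; apply sumC_kron; auto.
    - apply (Clinear_bounded_local (k j) C m); auto.
      intros kk Hkk. specialize (Ha kk Hkk). unfold vsum in *. unfold r.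
      rewrite (sumC_ext m (fun l => Cmul (a l) (Csub (M0 kk l) (M kk l)))
                 (fun l => Csub (Cmul (a l) (M0 kk l)) (Cmul (a l) (M kk l)))) by (intros; Cring).
      rewrite sumC_sub, Ha. Cring. }
  set (s := sumR m (fun l => cnorm (a l))).
  assert (Hs0 : 0 <= s) by apply sumR_cnorm_nonneg.
  assert (Hrb : normN m r <= INR m * (dl * s)).
  { rewrite normN_eq, <- sumR_const. apply sumR_le. intros kk Hk. unfold r.
    eapply Rle_trans. apply cnorm_sum. unfold s. rewrite <- sumR_scal.
    apply sumR_le. intros l Hl. eapply Rle_trans. apply cnorm_mul.
    replace (Csub (M0 kk l) (M kk l)) with (Copp (Csub (M kk l) (M0 kk l))) by Cring.
    rewrite cnorm_opp, Rmult_comm. apply Rmult_le_compat_r. apply cnorm_ge0. auto. }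
  assert (Hs : s <= INR m * (C * (INR m * (dl * s)))).
  { rewrite <- sumR_const. unfold s at 1. apply sumR_le. intros j Hj. rewrite Hr by auto.
    eapply Rle_trans. apply Hb; auto. apply Rmult_le_compat_l; auto. }
  assert (Hhalf : INR m * INR m * C * dl <= 1 / 2).
  { unfold dl, perturb_tol. pose proof (pos_INR m).
    assert (0 <= INR m * INR m * C) by (apply Rmult_le_pos; nra).
    apply Rmult_le_reg_r with (2 * (INR m * INR m * C + 1)). lra. field_simplify; lra. }
  assert (Hs_eq0 : s = 0).
  { replace (INR m * (C * (INR m * (dl * s)))) with ((INR m * INR m * C * dl) * s) in Hs by ring.
    nra. }
  intros j Hj. apply cnorm_eq0, Rle_antisym; [|apply cnorm_ge0].
  rewrite <- Hs_eq0. apply (sumR_term m (fun l => cnorm (a l))); auto. intros; apply cnorm_ge0.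
Qed.

(** * The cone over a chart *)

Section Cone.
Variables (n : nat) (L : CV -> Prop) (f : CV -> Cx) (phi : CV -> CV) (D W : CV -> Prop).
Variable dphi : nat -> CV -> CV.
Hypothesis HLs : forall y, L y -> supp (2 * n) y.
Hypothesis HopD : is_open n D.
Hypothesis HopW : is_open (2 * n) W.
Hypothesis Hh : holo_map n (2 * n) phi D dphi.
Hypothesis Hind : forall x, D x -> lin_indep (2 * n) n (fun j => dphi j x).
Hypothesis HDW : forall x, D x -> L (phi x) /\ W (phi x).
Hypothesis Hsurj : forall y, L y -> W y -> exists x, D x /\ phi x = y.
Hypothesis Hinv : forall x, D x -> forall eps, eps > 0 -> exists del, del > 0 /\ forall x', D x' ->
  normN (2 * n) (vsub (phi x') (phi x)) < del -> normN n (vsub x' x) < eps.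
Hypothesis Hdf : forall p v c eps, curve_in L p v c eps ->
  cderiv0 (fun t => f (c t)) (Copp (Omega n p v)).

Definition cone_gen x := lift Defs.C1 (f (phi x)) (phi x).
Definition cone_lift x j := lift C0 (Copp (Omega n (phi x) (dphi j x))) (dphi j x).
Definition cone_frame x l := match l with O => cone_gen x | S j => cone_lift x j end.
(* Row [kk], column [l]: [hOmega] rather than [hgamma] drops the unit factor [Ci]. *)
Definition cone_gram x kk l := hOmega n (cone_frame x l) (tau (cone_frame x kk)).

Lemma chart_tangent x v : D x -> tangent L (phi x) v ->
  exists b, supp n b /\ v = vsum n b (fun j => dphi j x).
Proof.
  intros Dx Ht. destruct (lin_indep_left_inverse _ _ _ (Hind x Dx)) as [k [C Hk]].
  exists (coeffs n k v). split. apply coeffs_supp.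
  apply (chart_tangent_in_span n (2 * n) L phi D W dphi x k C); auto.
Qed.

Lemma cone_curve_base (U : CV -> Prop) c eps :
  (forall t, Rabs t < eps -> cone U f (c t)) ->
  forall t, Rabs t < eps ->
    let pc := fun i => Cmul (Cinv (c t 0%nat)) (c t (S (S i))) in
    c t 0%nat <> C0 /\ U pc /\ c t 1%nat = Cmul (c t 0%nat) (f pc) /\
    forall i, c t (S (S i)) = Cmul (c t 0%nat) (pc i).
Proof.
  intros Hin t Ht pc. destruct (Hin t Ht) as [lt [qt [Hlt [Uqt Eq]]]].
  assert (E0 : c t 0%nat = lt) by (rewrite Eq; unfold vscale, lift; Cring).
  assert (Epc : pc = qt).
  { apply functional_extensionality; intros i. unfold pc. rewrite E0, Eq. unfold vscale, lift.
    rewrite <- Cmul_assoc, Cinv_l by auto. apply Cmul_1_l. }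
  rewrite Epc, E0. repeat split; auto; rewrite Eq; reflexivity.
Qed.

Lemma cone_frame_combination y v l0 u b :
  v 1%nat = Cadd (Cmul (v 0%nat) (f (phi y))) (Cmul l0 (Copp (Omega n (phi y) u))) ->
  (forall i, v (S (S i)) = Cadd (Cmul (v 0%nat) (phi y i)) (Cmul l0 (u i))) ->
  u = vsum n b (fun j => dphi j y) ->
  v = vsum (S n) (fun l => match l with O => v 0%nat | S j => Cmul l0 (b j) end) (cone_frame y).
Proof.
  intros Ev1 Ev2 Eu.
  apply functional_extensionality; intros i. unfold vsum. rewrite sumC_shift.
  destruct i as [|[|i]]; simpl cone_frame; unfold cone_gen, cone_lift, lift.
  - rewrite sumC_zero. Cring. intros; Cring.
  - rewrite Ev1, Eu, Omega_sum_r, <- sumC_opp, <- sumC_scal.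
    rewrite (sumC_ext n _ (fun j => Cmul (Cmul l0 (b j)) (Copp (Omega n (phi y) (dphi j y))))).
    Cring. intros; Cring.
  - rewrite Ev2, Eu. unfold vsum. rewrite <- sumC_scal.
    rewrite (sumC_ext n _ (fun j => Cmul (Cmul l0 (b j)) (dphi j y i))). Cring. intros; Cring.
Qed.

(* Differentiating [c t = c_0(t) (1, f (p t), p t)] with [df = -Omega(p, .)] shows that every
   tangent vector of the cone at [lam (cone_gen y)] is a combination of the frame at [y]. *)
Lemma cone_tangent_in_frame (U : CV -> Prop) y lam v :
  (forall p, U p -> L p) -> D y -> lam <> C0 ->
  tangent (cone U f) (vscale lam (cone_gen y)) v ->
  exists a, v = vsum (S n) a (cone_frame y).
Proof.
  intros HUL Dy Hlam [c [eps [Heps [Hc0 [Hin Hvd]]]]].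
  set (pc := fun t i => Cmul (Cinv (c t 0%nat)) (c t (S (S i)))).
  pose proof (cone_curve_base U c eps Hin) as Hct. fold pc in Hct.
  set (l0 := c 0 0%nat).
  assert (Hl0 : l0 <> C0) by (apply (proj1 (Hct 0 ltac:(rewrite Rabs_R0; lra)))).
  set (p := phi y).
  assert (Hpc0 : pc 0 = p).
  { apply functional_extensionality; intros i. unfold pc. rewrite Hc0.
    unfold vscale, cone_gen, lift.
    replace (Cmul lam Defs.C1) with lam by Cring. rewrite <- Cmul_assoc, Cinv_l by auto.
    apply Cmul_1_l. }
  set (u := fun i => Cadd (Cmul (Copp (Cmul (v 0%nat) (Cmul (Cinv l0) (Cinv l0)))) (c 0 (S (S i))))
                          (Cmul (Cinv l0) (v (S (S i))))).
  assert (Hcurve : curve_in L p u pc eps).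
  { split; auto. split; auto. split.
    - intros t Ht. apply HUL, (Hct t Ht).
    - intros i. apply (cderiv0_mul (fun t => Cinv (c t 0%nat)) (fun t => c t (S (S i)))).
      + apply cderiv0_inv; auto. apply Hvd.
      + apply Hvd. }
  destruct (chart_tangent y u Dy (ex_intro _ pc (ex_intro _ eps Hcurve))) as [b [Sb Eu]].
  assert (Ev1 : v 1%nat = Cadd (Cmul (v 0%nat) (f p)) (Cmul l0 (Copp (Omega n p u)))).
  { apply (cderiv0_unique (fun t => c t 1%nat)). apply Hvd.
    apply (cderiv0_near (fun t => Cmul (c t 0%nat) (f (pc t))) _ _ eps); auto.
    - intros t Ht. symmetry; apply (Hct t Ht).
    - rewrite <- Hpc0 at 1. apply (cderiv0_mul (fun t => c t 0%nat) (fun t => f (pc t))).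
      apply Hvd. apply (Hdf _ _ _ _ Hcurve). }
  assert (Ev2 : forall i, v (S (S i)) = Cadd (Cmul (v 0%nat) (p i)) (Cmul l0 (u i))).
  { intros i. apply (cderiv0_unique (fun t => c t (S (S i)))). apply Hvd.
    apply (cderiv0_near (fun t => Cmul (c t 0%nat) (pc t i)) _ _ eps); auto.
    - intros t Ht. symmetry; apply (Hct t Ht).
    - replace (p i) with (pc 0 i) by (rewrite Hpc0; auto).
      apply (cderiv0_mul (fun t => c t 0%nat) (fun t => pc t i)). apply Hvd. apply Hcurve. }
  exists (fun l => match l with O => v 0%nat | S j => Cmul l0 (b j) end).
  apply (cone_frame_combination y v l0 u b); auto.
Qed.

Lemma cone_tangent_gen (U : CV -> Prop) y lam : lam <> C0 -> U (phi y) ->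
  tangent (cone U f) (vscale lam (cone_gen y)) (cone_gen y).
Proof.
  intros Hlam Uy. exists (fun t => vscale (Cadd lam (RtoC t)) (cone_gen y)), (cnorm lam).
  split. apply cnorm_pos; auto. split; [|split].
  - apply functional_extensionality; intros; unfold vscale. f_equal. destruct lam; Cring.
  - intros t Ht. exists (Cadd lam (RtoC t)), (phi y). split; [|split; auto].
    intros E. assert (H1 := f_equal Re E). assert (H2 := f_equal Im E). simpl in H1, H2.
    unfold cnorm in Ht. replace (Im lam) with 0 in Ht by lra.
    replace (Re lam) with (- t) in Ht by lra.
    rewrite Rabs_R0, Rabs_Ropp in Ht. lra.
  - intros i.
    assert (H : cderiv0 (fun t => vscale (Cadd lam (RtoC t)) (cone_gen y) i)
                        (Cadd C0 (cone_gen y i))).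
    { apply (cderiv0_ext (fun t => Cadd (Cmul lam (cone_gen y i)) (Cmul (RtoC t) (cone_gen y i)))).
      - intros t; unfold vscale; Cring.
      - apply cderiv0_add. apply cderiv0_const. apply cderiv0_Rmul. }
    rewrite Cadd_0_l in H. exact H.
Qed.

Lemma cone_tangent_lift (U : CV -> Prop) y lam k : D y -> lam <> C0 -> (k < n)%nat ->
  (exists r, r > 0 /\ forall z, D z -> normN n (vsub z y) < r -> U (phi z)) ->
  tangent (cone U f) (vscale lam (cone_gen y)) (vscale lam (cone_lift y k)).
Proof.
  intros Dy Hlam Hk [r [Hr HU]].
  destruct (is_open_line n D y (ebasis k) HopD Dy (ebasis_supp n k Hk)) as [rD [HrD Hline]].
  set (z := fun t => vadd y (vscale (RtoC t) (ebasis k))).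
  assert (Hr0 : Rmin r rD > 0) by (apply Rmin_pos; auto).
  assert (Hz : forall t, Rabs t < Rmin r rD -> D (z t) /\ U (phi (z t))).
  { intros t Ht. pose proof (Rmin_l r rD); pose proof (Rmin_r r rD).
    assert (D (z t)) by (apply Hline; lra).
    split; auto. apply HU; auto.
    replace (vsub (z t) y) with (vscale (RtoC t) (ebasis k))
      by (apply functional_extensionality; intros; unfold z, vsub, vadd; Cring).
    rewrite normN_ebasis; auto. lra. }
  destruct (Hh y Dy k Hk) as [Hdk _].
  assert (Hcz : curve_in L (phi y) (dphi k y) (fun t => phi (z t)) (Rmin r rD)).
  { split; auto. split. unfold z. rewrite vadd_scal0; auto. split.
    - intros t Ht. apply HDW, Hz; auto.
    - intros i. apply Hdk. }
  exists (fun t => vscale lam (cone_gen (z t))), (Rmin r rD).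
  split; auto. split; [|split].
  - unfold z. rewrite vadd_scal0; auto.
  - intros t Ht. exists lam, (phi (z t)). split; auto. split; auto. apply Hz; auto.
  - intros [|[|i]]; unfold vscale, cone_gen, cone_lift, lift.
    + apply (cderiv0_scal lam (fun _ => Defs.C1)). apply cderiv0_const.
    + apply (cderiv0_scal lam (fun t => f (phi (z t)))). exact (Hdf _ _ _ _ Hcz).
    + apply (cderiv0_scal lam (fun t => phi (z t) i)). apply Hdk.
Qed.

Lemma radical_gram_eqs y lam a v : lam <> C0 -> v = vsum (S n) a (cone_frame y) ->
  hgamma n v (cone_gen y) = C0 ->
  (forall k, (k < n)%nat -> hgamma n v (vscale lam (cone_lift y k)) = C0) ->
  forall kk, (kk < S n)%nat -> vsum (S n) a (fun l kk => cone_gram y kk l) kk = C0.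
Proof.
  intros Hlam Ev0 H0 Hk kk Hkk. unfold hgamma in *. subst v. unfold vsum at 1. destruct kk as [|k].
  - rewrite hOmega_sum_l in H0. apply Cmul_eq0_cancel in H0; [|apply Ci_neq0]. exact H0.
  - specialize (Hk k ltac:(lia)).
    rewrite tau_scal, hOmega_sum_l in Hk. apply Cmul_eq0_cancel in Hk; [|apply Ci_neq0].
    rewrite (sumC_ext (S n) _ (fun l => Cmul (Cconj lam) (Cmul (a l) (cone_gram y (S k) l)))) in Hk.
    + rewrite sumC_scal in Hk. apply Cmul_eq0_cancel in Hk; auto. apply Cconj_neq0; auto.
    + intros l Hl. rewrite hOmega_scal_r. unfold cone_gram. simpl cone_frame. Cring.
Qed.

Lemma cone_gram_real x0 : tau (phi x0) = phi x0 ->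
  cone_gram x0 0 0 = Csub (Cconj (f (phi x0))) (f (phi x0)) /\
  (forall j, cone_gram x0 0 (S j) = C0) /\
  (forall k, cone_gram x0 (S k) 0 = C0) /\
  (forall k j, cone_gram x0 (S k) (S j) = Omega n (dphi j x0) (tau (dphi k x0))).
Proof.
  intros Hreal. set (q := phi x0) in *.
  split; [|split; [|split]]; intros; unfold cone_gram; simpl cone_frame;
    unfold cone_gen, cone_lift, hOmega; rewrite !tau_lift, !shift2_lift; fold q; rewrite ?Hreal.
  - rewrite Omega_self. Cring.
  - rewrite (Omega_antisym n (dphi j x0)). Cring.
  - replace (Cconj (Copp (Omega n q (dphi k x0)))) with (Copp (Omega n q (tau (dphi k x0)))).
    + Cring.
    + rewrite <- Hreal at 1. rewrite <- Omega_conj. Cring.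
  - Cring.
Qed.

Hypothesis Hkael : kaehlerian n L.

Lemma cone_gram_lin_indep x0 : D x0 -> tau (phi x0) = phi x0 -> Im (f (phi x0)) <> 0 ->
  lin_indep (S n) (S n) (fun l kk => cone_gram x0 kk l).
Proof.
  intros Dx0 Hreal Hf a Ha.
  destruct (cone_gram_real x0 Hreal) as [HM00 [HM0S [HMS0 HMSS]]].
  assert (Ha0 : a 0%nat = C0).
  { specialize (Ha 0%nat ltac:(lia)). unfold vsum in Ha. rewrite sumC_shift, HM00, sumC_zero in Ha.
    - rewrite Cadd_0_r, Cmul_comm in Ha. apply (Cmul_eq0_cancel _ _ Ha).
      intros E. assert (H1 := f_equal Im E). simpl in H1. apply Hf. lra.
    - intros; rewrite HM0S; Cring. }
  set (b := fun j => if Nat.ltb j n then a (S j) else C0).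
  assert (Sb : supp n b) by (intros j Hj; unfold b; destruct (Nat.ltb_spec j n); auto; lia).
  set (u := vsum n b (fun j => dphi j x0)).
  assert (Hu : forall k, (k < n)%nat -> Omega n u (tau (dphi k x0)) = C0).
  { intros k Hk. specialize (Ha (S k) ltac:(lia)). unfold vsum in Ha.
    rewrite sumC_shift, HMS0, Ha0, Cmul_0_l, Cadd_0_l in Ha.
    unfold u. rewrite Omega_sum_l, <- Ha. apply sumC_ext. intros j Hj.
    rewrite HMSS. unfold b. destruct (Nat.ltb_spec j n); auto; lia. }
  assert (Hutan : tangent L (phi x0) u).
  { destruct (chart_line_curve n (2 * n) L phi D dphi x0 b HopD Hh HLs) as [eps Hc]; auto.
    - intros; apply HDW; auto.
    - exists (fun t => phi (vadd x0 (vscale (RtoC t) b))), eps. exact Hc. }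
  assert (Hu0 : u = vzero).
  { apply (Hkael (phi x0) (proj1 (HDW x0 Dx0)) u Hutan). intros w Hw.
    destruct (chart_tangent x0 w Dx0 Hw) as [e [Se Ew]]. unfold gamma.
    assert (tau w = vsum n (fun j => Cconj (e j)) (fun j => tau (dphi j x0))).
    { rewrite Ew. apply functional_extensionality; intros i. unfold tau, vsum. rewrite Cconj_sumC.
      apply sumC_ext; intros; Cring. }
    rewrite H, Omega_sum_r, sumC_zero. Cring. intros j Hj. rewrite Hu; auto; Cring. }
  intros [|j] Hj; auto.
  assert (b j = C0) by (apply (Hind x0 Dx0 b); [intros; fold u; rewrite Hu0; reflexivity | lia]).
  unfold b in H. destruct (Nat.ltb_spec j n); auto; lia.
Qed.

Lemma cone_radical_trivial (U : CV -> Prop) y lam v :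
  (forall p, U p -> L p) -> D y -> lam <> C0 -> U (phi y) ->
  (exists r, r > 0 /\ forall z, D z -> normN n (vsub z y) < r -> U (phi z)) ->
  lin_indep (S n) (S n) (fun l kk => cone_gram y kk l) ->
  tangent (cone U f) (vscale lam (cone_gen y)) v ->
  (forall w, tangent (cone U f) (vscale lam (cone_gen y)) w -> hgamma n v w = C0) ->
  v = vzero.
Proof.
  intros HUL Dy Hlam Uy Hnear Hgram Hv Hrad.
  destruct (cone_tangent_in_frame U y lam v HUL Dy Hlam Hv) as [a Ea].
  assert (Ha : forall l, (l < S n)%nat -> a l = C0).
  { apply Hgram, (radical_gram_eqs y lam a v Hlam Ea).
    - apply Hrad, cone_tangent_gen; auto.
    - intros k Hk. apply Hrad, cone_tangent_lift; auto. }
  rewrite Ea. apply functional_extensionality; intros i. unfold vsum, vzero.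
  apply sumC_zero. intros l Hl. rewrite Ha; auto. Cring.
Qed.

Hypothesis Hf_holo : exists df, holo_map n 1 (fun x _ => f (phi x)) D df.

Lemma cone_frame_cont_at x0 l : D x0 -> (l < S n)%nat ->
  forall i, cont_at n D x0 (fun y => cone_frame y l i).
Proof.
  intros Dx Hl.
  assert (Hphi : forall i, cont_at n D x0 (fun y => phi y i)).
  { intros i. destruct (Nat.ltb_spec i (2 * n)).
    - apply (holo_map_cont_at n (2 * n) phi D dphi); auto.
    - apply cont_at_const_on; auto. intros y Dy. apply (HLs _ (proj1 (HDW y Dy))); auto. }
  assert (Hdphi : forall j, (j < n)%nat -> forall i, cont_at n D x0 (fun y => dphi j y i)).
  { intros j Hj i. destruct (Nat.ltb_spec i (2 * n)).
    - intros e He. destruct (Hh x0 Dx j Hj) as [_ [_ C]]. destruct (C e He) as [d [Hd A]].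
      exists d; split; auto. intros y Dy Hy. eapply Rle_lt_trans. 2: apply (A y Dy Hy).
      apply (normN_comp (2 * n) (vsub (dphi j y) (dphi j x0)) i); auto.
    - apply cont_at_const_on; auto. intros y Dy.
      apply (holo_deriv_supp n (2 * n) L phi D dphi y j i); auto. intros; apply HDW; auto. }
  intros [|[|i]]; destruct l as [|j]; simpl; unfold cone_gen, cone_lift, lift.
  - apply cont_at_const.
  - apply cont_at_const.
  - destruct Hf_holo as [dF HF].
    apply (holo_map_cont_at n 1 (fun x _ => f (phi x)) D dF x0 HopD HF Dx 0); lia.
  - apply cont_at_opp, (cont_at_Omega n D x0 phi (dphi j)); auto. apply Hdphi; lia.
  - apply Hphi.
  - apply Hdphi; lia.
Qed.

Lemma cone_gram_near x0 eps : D x0 -> eps > 0 -> exists rho, rho > 0 /\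
  forall kk, (kk < S n)%nat -> forall l, (l < S n)%nat -> forall y, D y ->
    normN n (vsub y x0) < rho -> cnorm (Csub (cone_gram y kk l) (cone_gram x0 kk l)) < eps.
Proof.
  intros Dx0 He.
  apply (finite_common_delta (S n) (fun kk d => forall l, (l < S n)%nat -> forall y, D y ->
     normN n (vsub y x0) < d -> cnorm (Csub (cone_gram y kk l) (cone_gram x0 kk l)) < eps)).
  - intros kk Hkk. apply (finite_common_delta (S n) (fun l d => forall y, D y ->
      normN n (vsub y x0) < d -> cnorm (Csub (cone_gram y kk l) (cone_gram x0 kk l)) < eps)).
    + intros l Hl.
      apply (cont_at_hgamma_entry n D x0 (fun y => cone_frame y l) (fun y => cone_frame y kk));
        auto; apply cone_frame_cont_at; auto.
    + intros l d d' A B y Dy Hy. apply A; auto; lra.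
  - intros kk d d' A B l Hl y Dy Hy. apply A; auto; lra.
Qed.

Definition chart_ball x0 rho : CV -> Prop :=
  fun p => exists y, D y /\ normN n (vsub y x0) < rho /\ phi y = p.

Lemma chart_ball_sub x0 rho p : chart_ball x0 rho p -> L p.
Proof. intros [y [Dy [_ <-]]]. apply HDW; auto. Qed.

Lemma chart_ball_rel_open x0 rho : rel_open (2 * n) L (chart_ball x0 rho).
Proof.
  intros p [y [Dy [Hy <-]]]. split. apply HDW; auto.
  destruct (HopW (phi y) (proj2 (HDW y Dy))) as [_ [rW [HrW BW]]].
  destruct (Hinv y Dy (rho - normN n (vsub y x0)) ltac:(lra)) as [dI [HdI I]].
  exists (Rmin rW dI). split. apply Rmin_pos; auto. intros p' Lp' Hp'.
  pose proof (Rmin_l rW dI); pose proof (Rmin_r rW dI).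
  assert (W p') by (apply BW; [apply HLs; auto | lra]).
  destruct (Hsurj p' Lp' H1) as [y' [Dy' <-]].
  exists y'. split; auto. split; auto.
  pose proof (I y' Dy' ltac:(lra)). pose proof (normN_sub_triang n y' y x0). lra.
Qed.

Lemma chart_ball_center x0 rho : D x0 -> rho > 0 -> chart_ball x0 rho (phi x0).
Proof.
  intros Dx0 Hrho. exists x0. repeat split; auto.
  replace (vsub x0 x0) with vzero
    by (apply functional_extensionality; intros; unfold vsub, vzero; Cring).
  rewrite normN_eq, (sumR_ext n _ (fun _ => 0)), sumR_const. lra.
  intros; apply cnorm_C0.
Qed.

Lemma chart_ball_near x0 rho y : D y -> normN n (vsub y x0) < rho ->
  exists r, r > 0 /\ forall z, D z -> normN n (vsub z y) < r -> chart_ball x0 rho (phi z).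
Proof.
  intros Dy Hy. exists (rho - normN n (vsub y x0)). split. lra.
  intros z Dz Hz. exists z. repeat split; auto.
  pose proof (normN_sub_triang n z y x0). lra.
Qed.

Lemma cone_kaehler_near x0 : D x0 -> tau (phi x0) = phi x0 -> Im (f (phi x0)) <> 0 ->
  exists rho, rho > 0 /\ nondeg_on (hgamma n) (cone (chart_ball x0 rho) f).
Proof.
  intros Dx0 Hreal Hf.
  destruct (lin_indep_left_inverse _ _ _ (cone_gram_lin_indep x0 Dx0 Hreal Hf)) as [kap [CK HL]].
  pose proof (perturb_tol_pos (S n) CK (proj1 (proj2 (proj2 HL)))) as Htol.
  destruct (cone_gram_near x0 _ Dx0 Htol) as [rho [Hrho Hnear]].
  exists rho. split; auto.
  intros P [lam [p [Hlam [Up ->]]]] v Hv Hrad.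
  destruct Up as [y [Dy [Hy <-]]].
  apply (cone_radical_trivial (chart_ball x0 rho) y lam v); auto.
  - apply chart_ball_sub.
  - exists y. auto.
  - apply chart_ball_near; auto.
  - apply (lin_indep_perturb (S n) (cone_gram x0) (cone_gram y) kap CK HL).
    intros kk l Hkk Hl. left. apply Hnear; auto.
Qed.

End Cone.

Theorem mainTheorem7 (n : nat) (L : CV -> Prop) (f : CV -> Cx) (q : CV) :
  lag_pair n L f -> kaehlerian n L ->
  L q -> tau q = q -> Im (f q) <> 0 ->
  exists U : CV -> Prop,
    (forall p, U p -> L p) /\ rel_open (2 * n) L U /\ U q /\
    nondeg_on (hgamma n) (cone U f).
Proof.
  intros [[[HLs Hcharts] _] [Hhol Hdf]] Hkael Lq Hreal Hf.
  destruct (Hcharts q Lq) as [phi [D [W [Hc Wq]]]].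
  pose proof Hc as [HopD [HopW [[dphi [Hh Hind]] [HDW [Hsurj [_ Hinv]]]]]].
  destruct (Hsurj q Lq Wq) as [x0 [Dx0 <-]].
  destruct (cone_kaehler_near n L f phi D W dphi HLs HopD HopW Hh Hind HDW Hsurj Hinv Hdf Hkael
              (Hhol phi D W Hc) x0 Dx0 Hreal Hf) as [rho [Hrho Hnd]].
  exists (chart_ball n phi D x0 rho). split; [|split; [|split]].
  - apply (chart_ball_sub n L phi D W HDW).
  - apply (chart_ball_rel_open n L phi D W HLs HopW HDW Hsurj Hinv).
  - apply chart_ball_center; auto.
  - exact Hnd.
Qed.
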